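(* Let $C\subset\mathbb R^3$ be a non-closed embedded curve of length $l>0$ with nowhere vanishing curvature, and let $F\in\mathcal D_*(C)$ be a normal form. Then $F(\Omega_\epsilon)$ is congruent to $\check F(\Omega_\epsilon)$ for sufficiently small $\epsilon>0$ if and only if (1) $C$ lies in a plane, or (2) $C$ has a positive symmetry and $\mu_F$ has a symmetry.
   Context: $C$ is oriented; $J=[-l/2,l/2]$, $\Omega_\epsilon=J\times(-\epsilon,\epsilon)$. ''$F(\Omega_\epsilon)$ is congruent to $G(\Omega_\epsilon)$ for sufficiently small $\epsilon$'' means there exist an isometry $T$ of $\mathbb R^3$ and $\epsilon_0>0$ with $T(F(\Omega_\epsilon))=G(\Omega_\epsilon)$ for all $0<\epsilon<\epsilon_0$. A developable strip along $C$ is the germ of a $C^\infty$ embedding $f(u,v)=f(u,0)+v\,\xi_f(u)$ with $\mathbf c_f(u)=f(u,0)$ parametrizing $C$, $\xi_f$ unit, and zero Gaussian curvature; with the Frenet frame $(\mathbf e,\mathbf n,\mathbf b)$ of $\mathbf c_f$ write $\xi_f=\cos\beta_f\,\mathbf e+\sin\beta_f(\cos\alpha_f\,\mathbf n+\sin\alpha_f\,\mathbf b)$. $\mathcal D(C)$: strips with $\mathbf c_f$ inducing the orientation of $C$ and $0<|\cos\alpha_f|<1$, normalized by $0<|\alpha_f|<\pi/2$ (first angular function), $0<\beta_f<\pi$. Geodesic curvature $\mu_f=\kappa_f\cos\alpha_f$ ($\kappa_f$ the curvature of $\mathbf c_f$); admissible ($\in\mathcal D_*(C)$) if $\mu_f<\min\kappa_f$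 everywhere. A normal form is such a strip $F(s,v)$ defined near $J\times\{0\}$ with $s\mapsto F(s,0)$ an arc-length parametrization of $C$; it is determined by that parametrization and its first angular function (zero Gaussian curvature being $\cot\beta_F=(\alpha_F'+\tau)/(\kappa\sin\alpha_F)$). The dual $\check F$ is the normal form with $\check F(s,0)=F(s,0)$ and first angular function $-\alpha_F$. $\mu_F$ (a function on $[-l/2,l/2]$) has a symmetry if $\mu_F(-s)=\mu_F(s)$ for all $s$. A positive symmetry of $C$ is an orientation-preserving isometry $T\ne\mathrm{id}$ of $\mathbb R^3$ with $T(C)=C$. *)

From Stdlib Require Import Reals.
From Coquelicot Require Import Coquelicot.
Open Scope R_scope.

Record V3 := mkV3 { v1 : R; v2 : R; v3 : R }.

Definition vadd (u w : V3) : V3 := mkV3 (v1 u + v1 w) (v2 u + v2 w) (v3 u + v3 w).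
Definition vsub (u w : V3) : V3 := mkV3 (v1 u - v1 w) (v2 u - v2 w) (v3 u - v3 w).
Definition vscale (a : R) (u : V3) : V3 := mkV3 (a * v1 u) (a * v2 u) (a * v3 u).
Definition dot (u w : V3) : R := v1 u * v1 w + v2 u * v2 w + v3 u * v3 w.
Definition cross (u w : V3) : V3 :=
  mkV3 (v2 u * v3 w - v3 u * v2 w) (v3 u * v1 w - v1 u * v3 w) (v1 u * v2 w - v2 u * v1 w).
Definition vnorm (u : V3) : R := sqrt (dot u u).
Definition dist3 (u w : V3) : R := vnorm (vsub u w).
Definition det3 (u v w : V3) : R := dot u (cross v w).

Definition smooth_fun (f : R -> R) : Prop := forall (n : nat) (x : R), ex_derive_n f n x.
Definition smooth_curve (c : R -> V3) : Prop :=
  smooth_fun (fun t => v1 (c t)) /\ smooth_fun (fun t => v2 (c t)) /\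
  smooth_fun (fun t => v3 (c t)).
Definition vder (c : R -> V3) (s : R) : V3 :=
  mkV3 (Derive (fun t => v1 (c t)) s) (Derive (fun t => v2 (c t)) s)
       (Derive (fun t => v3 (c t)) s).

Definition inJ (l s : R) : Prop := - l / 2 <= s <= l / 2.
Definition inOmega (l eps s v : R) : Prop := inJ l s /\ - eps < v < eps.

(* ---------- Frenet apparatus (formulas valid for any regular curve;
   for an arc-length parametrization they are the usual ones) ---------- *)
Section Frenet.
Variable c : R -> V3.
Definition d1 := vder c.
Definition d2 := vder (vder c).
Definition d3 := vder (vder (vder c)).
Definition curvature (s : R) : R :=
  vnorm (cross (d1 s) (d2 s)) / (vnorm (d1 s)) ^ 3.
Definition torsion (s : R) : R :=
  det3 (d1 s) (d2 s) (d3 s) / (vnorm (cross (d1 s) (d2 s))) ^ 2.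
Definition tangent (s : R) : V3 := vscale (/ vnorm (d1 s)) (d1 s).
Definition binormal (s : R) : V3 :=
  vscale (/ vnorm (cross (d1 s) (d2 s))) (cross (d1 s) (d2 s)).
Definition principal_normal (s : R) : V3 := cross (binormal s) (tangent s).
End Frenet.

(* ---------- Normal forms of developable strips ----------
   Given the arc-length parametrization c of C and the first angular function
   alpha, the second angular function beta in (0,pi) is fixed by the zero
   Gaussian curvature condition  cot beta = (alpha' + tau)/(kappa sin alpha);
   beta = pi/2 - atan(.) is the unique such value in (0,pi). *)
Definition cot_beta (c : R -> V3) (alpha : R -> R) (s : R) : R :=
  (Derive alpha s + torsion c s) / (curvature c s * sin (alpha s)).
Definition beta_nf (c : R -> V3) (alpha : R -> R) (s : R) : R :=
  PI / 2 - atan (cot_beta c alpha s).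
Definition xi_nf (c : R -> V3) (alpha : R -> R) (s : R) : V3 :=
  vadd (vscale (cos (beta_nf c alpha s)) (tangent c s))
       (vscale (sin (beta_nf c alpha s))
          (vadd (vscale (cos (alpha s)) (principal_normal c s))
                (vscale (sin (alpha s)) (binormal c s)))).
Definition normal_form (c : R -> V3) (alpha : R -> R) (s v : R) : V3 :=
  vadd (c s) (vscale v (xi_nf c alpha s)).
Definition dual_normal_form (c : R -> V3) (alpha : R -> R) : R -> R -> V3 :=
  normal_form c (fun s => - alpha s).
Definition geod_curv (c : R -> V3) (alpha : R -> R) (s : R) : R :=
  curvature c s * cos (alpha s).

Definition arclength_curve (l : R) (c : R -> V3) : Prop :=
  0 < l /\ smooth_curve c /\
  (forall s, inJ l s -> vnorm (vder c s) = 1) /\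
  (forall s t, inJ l s -> inJ l t -> c s = c t -> s = t) /\
  (forall s, inJ l s -> 0 < curvature c s).

Definition admissible_normal_form (l : R) (c : R -> V3) (alpha : R -> R) : Prop :=
  smooth_fun alpha /\
  (forall s, inJ l s -> 0 < Rabs (alpha s) < PI / 2) /\
  (* germ of an embedding near J x {0} *)
  (exists delta, 0 < delta /\
     forall s v s' v', inOmega l delta s v -> inOmega l delta s' v' ->
       normal_form c alpha s v = normal_form c alpha s' v' -> s = s' /\ v = v') /\
  (forall s t, inJ l s -> inJ l t -> geod_curv c alpha s < curvature c t).

Definition isometry3 (T : V3 -> V3) : Prop :=
  forall x y, dist3 (T x) (T y) = dist3 x y.
Definition orientation_preserving (T : V3 -> V3) : Prop :=
  forall x0 x1 x2 x3,
    det3 (vsub (T x1) (T x0)) (vsub (T x2) (T x0)) (vsub (T x3) (T x0)) =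
    det3 (vsub x1 x0) (vsub x2 x0) (vsub x3 x0).

Definition image_Omega (l eps : R) (F : R -> R -> V3) (p : V3) : Prop :=
  exists s v, inOmega l eps s v /\ p = F s v.

Definition congruent_small (l : R) (F G : R -> R -> V3) : Prop :=
  exists T eps0, isometry3 T /\ 0 < eps0 /\
    forall eps, 0 < eps < eps0 ->
      forall p, (exists q, image_Omega l eps F q /\ p = T q) <-> image_Omega l eps G p.

Definition curve_image (l : R) (c : R -> V3) (p : V3) : Prop :=
  exists s, inJ l s /\ p = c s.

Definition lies_in_plane (l : R) (c : R -> V3) : Prop :=
  exists p0 u, u <> mkV3 0 0 0 /\ forall s, inJ l s -> dot (vsub (c s) p0) u = 0.

Definition has_positive_symmetry (l : R) (c : R -> V3) : Prop :=
  exists T, isometry3 T /\ orientation_preserving T /\ (exists x, T x <> x) /\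
    forall p, (exists q, curve_image l c q /\ p = T q) <-> curve_image l c p.

Definition symmetric_on_J (l : R) (f : R -> R) : Prop :=
  forall s, inJ l s -> f (- s) = f s.

(* A congruence T of F(Omega_eps) onto the dual strip for all small eps maps C into
   itself, C being the limit of the shrinking strips.  T is affine, and through the
   arc-length parameter it induces an isometry of J, so it either fixes C pointwise or
   reverses it (s |-> -s).  T also carries each ruling of F into the tangent plane of the
   dual strip along the matching ruling.  In Frenet coordinates this forces
   sin (2 alpha) = 0 when T fixes C (then T = id unless C is planar) or reverses it with
   det T = -1, which 0 < |alpha| < pi/2 excludes, and alpha (-s) = alpha s when det T = 1;
   so T is a positive symmetry and mu = kappa cos alpha is even.
   Conversely, cot beta = (alpha' + tau) / (kappa sin alpha) is unchanged by
   alpha |-> -alpha when tau = 0, so the reflection in the plane of a planar C maps each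
   ruling of F onto the dual one; and for a positive symmetry reversing C (kappa and tau
   are then even) and alpha even, the dual angle is beta' (-s) = pi - beta s, so the
   symmetry maps F(s, v) to the dual strip at (-s, v). *)

From Pilot Require Import Defs.
From Stdlib Require Import Reals Lra Psatz Classical IndefiniteDescription.
From Coquelicot Require Import Coquelicot.
Open Scope R_scope.

(** * Vectors, orthonormal frames and isometries of R^3 *)

Lemma V3_ext (u w : V3) : v1 u = v1 w -> v2 u = v2 w -> v3 u = v3 w -> u = w.
Proof. destruct u, w; simpl; intros -> -> ->; reflexivity. Qed.

Definition v0 : V3 := mkV3 0 0 0.
Definition e1 : V3 := mkV3 1 0 0.
Definition e2 : V3 := mkV3 0 1 0.
Definition e3 : V3 := mkV3 0 0 1.

Definition lincomb (E1 E2 E3 x : V3) : V3 :=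
  vadd (vadd (vscale (v1 x) E1) (vscale (v2 x) E2)) (vscale (v3 x) E3).
Definition affine (b E1 E2 E3 x : V3) : V3 := vadd b (lincomb E1 E2 E3 x).

Definition orthonormal (E1 E2 E3 : V3) : Prop :=
  dot E1 E1 = 1 /\ dot E2 E2 = 1 /\ dot E3 E3 = 1 /\
  dot E1 E2 = 0 /\ dot E1 E3 = 0 /\ dot E2 E3 = 0.

Ltac vec_ring :=
  unfold det3, dot, cross, affine, lincomb, vadd, vsub, vscale, v0, e1, e2, e3, Rdiv;
  try apply V3_ext; simpl; ring.

Lemma dot_comm a b : dot a b = dot b a.
Proof. vec_ring. Qed.

Lemma dot_self_ge0 x : 0 <= dot x x.
Proof. destruct x; unfold dot; simpl; nra. Qed.

Lemma dot_self_eq0 x : dot x x = 0 -> x = v0.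
Proof.
  destruct x as [a b c]; unfold dot; simpl; intros H.
  apply V3_ext; simpl; nra.
Qed.

Lemma vnorm_ge0 x : 0 <= vnorm x.
Proof. apply sqrt_pos. Qed.

Lemma vnorm_sqr x : vnorm x ^ 2 = dot x x.
Proof. unfold vnorm; rewrite pow2_sqrt; [reflexivity | apply dot_self_ge0]. Qed.

Lemma vnorm_v0 : vnorm v0 = 0.
Proof. unfold vnorm, dot, v0; simpl; replace (0 * 0 + 0 * 0 + 0 * 0) with 0 by ring; apply sqrt_0. Qed.

Lemma vnorm_eq0 x : vnorm x = 0 -> x = v0.
Proof. intros H; apply dot_self_eq0; rewrite <- vnorm_sqr, H; ring. Qed.

Lemma vnorm_pos x : x <> v0 -> 0 < vnorm x.
Proof.
  intros Hx; destruct (vnorm_ge0 x) as [|H]; [assumption|].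
  exfalso; apply Hx, vnorm_eq0; auto.
Qed.

Lemma vnorm_sub_eq0 x y : vnorm (vsub x y) = 0 -> x = y.
Proof.
  intros H; apply vnorm_eq0 in H.
  apply V3_ext; [apply (f_equal v1) in H | apply (f_equal v2) in H | apply (f_equal v3) in H];
  simpl in H; lra.
Qed.

Lemma vnorm_le x y : 0 <= y -> dot x x <= y ^ 2 -> vnorm x <= y.
Proof. intros Hy H; rewrite <- (sqrt_pow2 y Hy); apply sqrt_le_1_alt, H. Qed.

Lemma vnorm_scale k x : vnorm (vscale k x) = Rabs k * vnorm x.
Proof.
  unfold vnorm; rewrite <- sqrt_Rsqr_abs, <- sqrt_mult_alt by apply Rle_0_sqr.
  f_equal; unfold Rsqr; destruct x; vec_ring.
Qed.

Lemma vnorm_opp x : vnorm (vscale (-1) x) = vnorm x.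
Proof. rewrite vnorm_scale; replace (Rabs (-1)) with 1 by (unfold Rabs; destruct Rcase_abs; lra); ring. Qed.

Lemma cauchy_schwarz a b : Rabs (dot a b) <= vnorm a * vnorm b.
Proof.
  assert (Hlag : dot a a * dot b b - dot a b ^ 2 = dot (cross a b) (cross a b)) by vec_ring.
  rewrite <- (sqrt_pow2 (Rabs (dot a b))) by apply Rabs_pos.
  unfold vnorm; rewrite <- sqrt_mult_alt by apply dot_self_ge0.
  apply sqrt_le_1_alt; rewrite pow2_abs.
  pose proof (dot_self_ge0 (cross a b)); lra.
Qed.

Lemma vnorm_add_le a b : vnorm (vadd a b) <= vnorm a + vnorm b.
Proof.
  apply vnorm_le; [pose proof (vnorm_ge0 a); pose proof (vnorm_ge0 b); lra|].
  replace (dot (vadd a b) (vadd a b)) with (dot a a + 2 * dot a b + dot b b) by vec_ring.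
  rewrite <- !vnorm_sqr; pose proof (cauchy_schwarz a b); pose proof (Rle_abs (dot a b)); nra.
Qed.

Lemma vnorm_sub_le a b : vnorm (vsub a b) <= vnorm a + vnorm b.
Proof.
  replace (vsub a b) with (vadd a (vscale (-1) b)) by vec_ring.
  rewrite <- (vnorm_opp b); apply vnorm_add_le.
Qed.

Lemma vnorm_le_coords x : vnorm x <= Rabs (v1 x) + Rabs (v2 x) + Rabs (v3 x).
Proof.
  apply vnorm_le; [pose proof (Rabs_pos (v1 x)); pose proof (Rabs_pos (v2 x));
                   pose proof (Rabs_pos (v3 x)); lra|].
  destruct x as [a b c]; unfold dot; simpl.
  pose proof (Rsqr_abs a); pose proof (Rsqr_abs b); pose proof (Rsqr_abs c); unfold Rsqr in *.
  pose proof (Rabs_pos a); pose proof (Rabs_pos b); pose proof (Rabs_pos c); nra.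
Qed.

Lemma dot_unit_le x e : vnorm e = 1 -> Rabs (dot x e) <= vnorm x.
Proof. intros He; rewrite <- (Rmult_1_r (vnorm x)), <- He; apply cauchy_schwarz. Qed.

Lemma det3_le a b c : Rabs (det3 a b c) <= vnorm a * vnorm b * vnorm c.
Proof.
  unfold det3; eapply Rle_trans; [apply cauchy_schwarz|].
  rewrite Rmult_assoc; apply Rmult_le_compat_l; [apply vnorm_ge0|].
  apply vnorm_le; [pose proof (vnorm_ge0 b); pose proof (vnorm_ge0 c); nra|].
  replace (dot (cross b c) (cross b c)) with (dot b b * dot c c - dot b c ^ 2) by vec_ring.
  rewrite Rpow_mult_distr, !vnorm_sqr; pose proof (pow2_ge_0 (dot b c)); lra.
Qed.

Lemma cross_scale_l k a b : cross (vscale k a) b = vscale k (cross a b).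
Proof. vec_ring. Qed.

Lemma cross_scale_r k a b : cross a (vscale k b) = vscale k (cross a b).
Proof. vec_ring. Qed.

Lemma lincomb_basis E1 E2 E3 :
  lincomb E1 E2 E3 e1 = E1 /\ lincomb E1 E2 E3 e2 = E2 /\ lincomb E1 E2 E3 e3 = E3.
Proof. repeat split; vec_ring. Qed.

Lemma lincomb_scale E1 E2 E3 k x : lincomb E1 E2 E3 (vscale k x) = vscale k (lincomb E1 E2 E3 x).
Proof. vec_ring. Qed.

Lemma affine_sub b E1 E2 E3 x y :
  vsub (affine b E1 E2 E3 x) (affine b E1 E2 E3 y) = lincomb E1 E2 E3 (vsub x y).
Proof. vec_ring. Qed.

Lemma det3_lincomb E1 E2 E3 a b c :
  det3 (lincomb E1 E2 E3 a) (lincomb E1 E2 E3 b) (lincomb E1 E2 E3 c) = det3 E1 E2 E3 * det3 a b c.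
Proof. vec_ring. Qed.

Lemma dot_lincomb E1 E2 E3 a b : orthonormal E1 E2 E3 ->
  dot (lincomb E1 E2 E3 a) (lincomb E1 E2 E3 b) = dot a b.
Proof.
  intros (h1 & h2 & h3 & h4 & h5 & h6).
  transitivity (v1 a * v1 b * dot E1 E1 + v2 a * v2 b * dot E2 E2 + v3 a * v3 b * dot E3 E3
    + (v1 a * v2 b + v2 a * v1 b) * dot E1 E2 + (v1 a * v3 b + v3 a * v1 b) * dot E1 E3
    + (v2 a * v3 b + v3 a * v2 b) * dot E2 E3); [vec_ring|].
  rewrite h1, h2, h3, h4, h5, h6; vec_ring.
Qed.

Lemma vnorm_lincomb E1 E2 E3 x : orthonormal E1 E2 E3 -> vnorm (lincomb E1 E2 E3 x) = vnorm x.
Proof. intros H; unfold vnorm; rewrite dot_lincomb; auto. Qed.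

Lemma orthonormal_det3 E1 E2 E3 : orthonormal E1 E2 E3 ->
  det3 E1 E2 E3 = 1 \/ det3 E1 E2 E3 = -1.
Proof.
  intros (h1 & h2 & h3 & h4 & h5 & h6).
  assert (Hgram : det3 E1 E2 E3 ^ 2 =
    dot E1 E1 * (dot E2 E2 * dot E3 E3 - dot E2 E3 * dot E2 E3)
    - dot E1 E2 * (dot E1 E2 * dot E3 E3 - dot E2 E3 * dot E1 E3)
    + dot E1 E3 * (dot E1 E2 * dot E2 E3 - dot E2 E2 * dot E1 E3)) by vec_ring.
  rewrite h1, h2, h3, h4, h5, h6 in Hgram.
  assert (Hf : (det3 E1 E2 E3 - 1) * (det3 E1 E2 E3 + 1) = 0) by nra.
  apply Rmult_integral in Hf; lra.
Qed.

Lemma orthogonal_to_frame_eq0 w a b c : det3 a b c <> 0 ->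
  dot w a = 0 -> dot w b = 0 -> dot w c = 0 -> w = v0.
Proof.
  intros Hd Ha Hb Hc.
  assert (Hexp : vscale (det3 a b c) w =
    vadd (vadd (vscale (dot w a) (cross b c)) (vscale (dot w b) (cross c a)))
         (vscale (dot w c) (cross a b))) by vec_ring.
  rewrite Ha, Hb, Hc in Hexp.
  apply V3_ext; [apply (f_equal v1) in Hexp | apply (f_equal v2) in Hexp | apply (f_equal v3) in Hexp];
  unfold v0; simpl in *; apply (Rmult_eq_reg_l (det3 a b c)); auto; lra.
Qed.

Lemma cross_lincomb E1 E2 E3 a b : orthonormal E1 E2 E3 ->
  cross (lincomb E1 E2 E3 a) (lincomb E1 E2 E3 b) =
  vscale (det3 E1 E2 E3) (lincomb E1 E2 E3 (cross a b)).
Proof.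
  intros HO.
  assert (HD : det3 E1 E2 E3 <> 0) by (destruct (orthonormal_det3 _ _ _ HO) as [->| ->]; lra).
  set (L := lincomb E1 E2 E3).
  set (w := vsub (cross (L a) (L b)) (vscale (det3 E1 E2 E3) (L (cross a b)))).
  assert (Hw : forall k, dot w (L k) = 0).
  { intros k.
    transitivity (det3 (L k) (L a) (L b) - det3 E1 E2 E3 * dot (L (cross a b)) (L k));
      [unfold w, L; vec_ring|].
    unfold L; rewrite det3_lincomb, dot_lincomb by exact HO; vec_ring. }
  destruct (lincomb_basis E1 E2 E3) as (B1 & B2 & B3).
  assert (w = v0) by (apply (orthogonal_to_frame_eq0 w E1 E2 E3 HD);
                      [rewrite <- B1 | rewrite <- B2 | rewrite <- B3]; apply Hw).
  apply V3_ext; [apply (f_equal v1) in H | apply (f_equal v2) in H | apply (f_equal v3) in H];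
  unfold w, v0 in H; simpl in *; lra.
Qed.

Lemma affine_isometry b E1 E2 E3 : orthonormal E1 E2 E3 -> isometry3 (affine b E1 E2 E3).
Proof. intros HO x y; unfold dist3; rewrite affine_sub; apply vnorm_lincomb, HO. Qed.

Lemma isometry_affine T : isometry3 T ->
  exists b E1 E2 E3, orthonormal E1 E2 E3 /\ forall x, T x = affine b E1 E2 E3 x.
Proof.
  intros HT.
  set (M x := vsub (T x) (T v0)).
  assert (Hsq : forall x y, dot (vsub (T x) (T y)) (vsub (T x) (T y)) = dot (vsub x y) (vsub x y)).
  { intros x y; rewrite <- !vnorm_sqr; unfold isometry3, dist3 in HT; rewrite HT; reflexivity. }
  assert (HM : forall x y, dot (M x) (M y) = dot x y).
  { intros x y; pose proof (Hsq x v0) as Hx; pose proof (Hsq y v0) as Hy; pose proof (Hsq x y) as Hxy.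
    replace (vsub (T x) (T y)) with (vsub (M x) (M y)) in Hxy by (unfold M; vec_ring).
    revert Hx Hy Hxy; fold (M x) (M y); generalize (M x) (M y); intros p q.
    destruct p, q, x, y; unfold dot, vsub, v0; simpl; intros; nra. }
  assert (HO : orthonormal (M e1) (M e2) (M e3))
    by (repeat split; rewrite HM; vec_ring).
  exists (T v0), (M e1), (M e2), (M e3); split; [exact HO|]; intros x.
  set (y := lincomb (M e1) (M e2) (M e3) x).
  assert (Hxy : dot (M x) y = dot x x).
  { transitivity (v1 x * dot (M x) (M e1) + v2 x * dot (M x) (M e2) + v3 x * dot (M x) (M e3));
      [unfold y; vec_ring|].
    rewrite !HM; vec_ring. }
  assert (Hd : dot (vsub (M x) y) (vsub (M x) y) = 0).
  { transitivity (dot (M x) (M x) - 2 * dot (M x) y + dot y y); [vec_ring|].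
    unfold y at 2 3; rewrite dot_lincomb, HM, Hxy by exact HO; ring. }
  apply dot_self_eq0 in Hd.
  apply V3_ext; [apply (f_equal v1) in Hd | apply (f_equal v2) in Hd | apply (f_equal v3) in Hd];
  unfold M, affine, v0 in *; simpl in *; lra.
Qed.

Lemma affine_orientation_det b E1 E2 E3 :
  orientation_preserving (affine b E1 E2 E3) -> det3 E1 E2 E3 = 1.
Proof.
  intros H; specialize (H v0 e1 e2 e3); rewrite !affine_sub in H.
  destruct (lincomb_basis E1 E2 E3) as (B1 & B2 & B3).
  replace (vsub e1 v0) with e1 in H by vec_ring; replace (vsub e2 v0) with e2 in H by vec_ring;
  replace (vsub e3 v0) with e3 in H by vec_ring.
  rewrite B1, B2, B3 in H; rewrite H; vec_ring.
Qed.

Lemma affine_orientation_preserving b E1 E2 E3 :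
  det3 E1 E2 E3 = 1 -> orientation_preserving (affine b E1 E2 E3).
Proof. intros HD x0 x1 x2 x3; rewrite !affine_sub, det3_lincomb, HD; ring. Qed.

(** * Derivatives of curves *)

Lemma smooth_ex_derive (f : R -> R) (x : R) : smooth_fun f -> ex_derive f x.
Proof. intros H; exact (H 1%nat x). Qed.

Lemma Derive_n_Derive f n x : Derive_n (Derive f) n x = Derive_n f (S n) x.
Proof.
  revert x; induction n as [|n IH]; intros x; [reflexivity|].
  simpl; apply Derive_ext; intros t; apply IH.
Qed.

Lemma smooth_Derive f : smooth_fun f -> smooth_fun (Derive f).
Proof.
  intros H [|n] x; [exact I|].
  apply (ex_derive_ext (Derive_n f (S n))); [intros t; symmetry; apply Derive_n_Derive|].
  exact (H (S (S n)) x).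
Qed.

Lemma smooth_opp (f : R -> R) : smooth_fun f -> smooth_fun (fun t => - f t).
Proof. intros H n x; apply ex_derive_n_opp, H. Qed.

Lemma smooth_continuous (f : R -> R) (x : R) : smooth_fun f -> continuous f x.
Proof. intros H; exact (ex_derive_continuous f x (smooth_ex_derive f x H)). Qed.

Definition vdiff (p : R -> V3) (s : R) : Prop :=
  ex_derive (fun t => v1 (p t)) s /\ ex_derive (fun t => v2 (p t)) s /\
  ex_derive (fun t => v3 (p t)) s.

Definition vcont (p : R -> V3) (s : R) : Prop :=
  continuous (fun t => v1 (p t)) s /\ continuous (fun t => v2 (p t)) s /\
  continuous (fun t => v3 (p t)) s.

Lemma smooth_curve_vder p : smooth_curve p -> smooth_curve (vder p).
Proof. intros (h1 & h2 & h3); repeat split; apply smooth_Derive; assumption. Qed.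

Lemma smooth_curve_vdiff p s : smooth_curve p -> vdiff p s.
Proof. intros (h1 & h2 & h3); repeat split; apply smooth_ex_derive; assumption. Qed.

Lemma smooth_curve_vcont p s : smooth_curve p -> vcont p s.
Proof. intros (h1 & h2 & h3); repeat split; apply smooth_continuous; assumption. Qed.

Lemma locally_Rabs (x : R) (P : R -> Prop) :
  locally x P <-> exists d, 0 < d /\ forall y, Rabs (y - x) < d -> P y.
Proof.
  split.
  - intros [d Hd]; exists d; split; [apply cond_pos|]; intros y Hy; apply Hd, Hy.
  - intros (d & Hd & H); exists (mkposreal d Hd); intros y Hy; apply H, Hy.
Qed.

Lemma locally_near (x d : R) : 0 < d -> locally x (fun y => Rabs (y - x) < d).
Proof. intros Hd; apply locally_Rabs; exists d; auto. Qed.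

Lemma Derive_approx (f : R -> R) (x : R) : ex_derive f x -> forall ep, 0 < ep ->
  locally x (fun y => Rabs (f y - f x - (y - x) * Derive f x) <= ep * Rabs (y - x)).
Proof.
  intros Hf ep Hep.
  destruct (Derive_correct f x Hf) as [_ Hdom].
  specialize (Hdom x (fun P HP => HP) (mkposreal ep Hep)).
  revert Hdom; apply filter_imp; intros y; simpl.
  unfold norm, minus, plus, opp, scal; simpl; unfold mult; simpl.
  replace (f y + - f x + - ((y + - x) * Derive f x)) with (f y - f x - (y - x) * Derive f x) by ring.
  replace (y + - x) with (y - x) by ring; auto.
Qed.

Lemma is_derive_of_approx (f : R -> R) (x l : R) :
  (forall ep, 0 < ep -> locally x (fun y => Rabs (f y - f x - (y - x) * l) <= ep * Rabs (y - x))) ->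
  is_derive f x l.
Proof.
  intros H; split; [apply is_linear_scal_l|].
  intros x' Hx' ep; rewrite <- (is_filter_lim_locally_unique (V := R_NormedModule) x x' Hx').
  generalize (H ep (cond_pos ep)); apply filter_imp; intros y Hy.
  unfold norm, minus, plus, opp, scal; simpl; unfold mult; simpl.
  replace (f y + - f x + - ((y + - x) * l)) with (f y - f x - (y - x) * l) by ring.
  replace (y + - x) with (y - x) by ring; exact Hy.
Qed.

Lemma vder_approx p x : vdiff p x -> forall ep, 0 < ep ->
  locally x (fun y => vnorm (vsub (vsub (p y) (p x)) (vscale (y - x) (vder p x))) <= ep * Rabs (y - x)).
Proof.
  intros (h1 & h2 & h3) ep Hep.
  assert (Hep3 : 0 < ep / 3) by lra.
  generalize (filter_and _ _ (Derive_approx (fun t => v1 (p t)) _ h1 _ Hep3)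
                (filter_and _ _ (Derive_approx (fun t => v2 (p t)) _ h2 _ Hep3)
                                (Derive_approx (fun t => v3 (p t)) _ h3 _ Hep3))).
  apply filter_imp; intros y (a1 & a2 & a3).
  eapply Rle_trans; [apply vnorm_le_coords|]; simpl; lra.
Qed.

Lemma vcont_approx p x : vcont p x -> forall ep, 0 < ep ->
  locally x (fun y => vnorm (vsub (p y) (p x)) <= ep).
Proof.
  intros (h1 & h2 & h3) ep Hep.
  assert (Hc : forall f : R -> R, continuous f x -> locally x (fun y => Rabs (f y - f x) < ep / 3)).
  { intros f Hf; apply continuity_pt_filterlim in Hf.
    exact (proj1 (continuity_pt_locally f x) Hf (mkposreal (ep / 3) ltac:(lra))). }
  generalize (filter_and _ _ (Hc _ h1) (filter_and _ _ (Hc _ h2) (Hc _ h3))).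
  apply filter_imp; intros y (a1 & a2 & a3).
  eapply Rle_trans; [apply vnorm_le_coords|]; simpl; lra.
Qed.

Lemma inJ_opp l s : inJ l s -> inJ l (- s).
Proof. unfold inJ; lra. Qed.

Lemma step_in_J l s d : 0 < l -> inJ l s -> 0 < d ->
  exists h, h <> 0 /\ Rabs h < d /\ inJ l (s + h).
Proof.
  intros Hl Hs Hd; set (k := Rmin (d / 2) (l / 2)).
  assert (Hk : 0 < k /\ k < d /\ k <= l / 2)
    by (unfold k; repeat split;
        [apply Rmin_glb_lt | eapply Rle_lt_trans; [apply Rmin_l|] | apply Rmin_r]; lra).
  unfold inJ in *; destruct (Rle_lt_dec s 0).
  - exists k; rewrite Rabs_pos_eq; repeat split; lra.
  - exists (- k); rewrite Rabs_Ropp, Rabs_pos_eq; repeat split; lra.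
Qed.

Lemma Rabs_le_all_eq0 a : (forall ep, 0 < ep -> Rabs a <= ep) -> a = 0.
Proof.
  intros H; destruct (Req_dec a 0) as [|Ha]; [assumption|].
  pose proof (Rabs_pos_lt a Ha); specialize (H (Rabs a / 2)); lra.
Qed.

Lemma Derive_eq_on_J l (f g : R -> R) s : 0 < l -> inJ l s -> ex_derive f s -> ex_derive g s ->
  (forall t, inJ l t -> f t = g t) -> Derive f s = Derive g s.
Proof.
  intros Hl Hs Hf Hg Hfg.
  apply Rminus_diag_uniq, Rabs_le_all_eq0; intros ep Hep.
  assert (Hep2 : 0 < ep / 2) by lra.
  destruct (proj1 (locally_Rabs _ _)
              (filter_and _ _ (Derive_approx f s Hf _ Hep2) (Derive_approx g s Hg _ Hep2)))
    as (d & Hd & H).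
  destruct (step_in_J l s d Hl Hs Hd) as (h & Hh0 & Hh & Hsh).
  destruct (H (s + h) ltac:(replace (s + h - s) with h by ring; exact Hh)) as [Hf' Hg'].
  rewrite (Hfg s), (Hfg (s + h)) in Hf' by assumption.
  replace (s + h - s) with h in * by ring.
  apply (Rmult_le_reg_r (Rabs h)); [apply Rabs_pos_lt, Hh0|].
  rewrite <- Rabs_mult, Rmult_comm.
  replace (h * (Derive f s - Derive g s)) with
    ((g (s + h) - g s - h * Derive g s) - (g (s + h) - g s - h * Derive f s)) by ring.
  eapply Rle_trans; [apply Rabs_triang|]; rewrite Rabs_Ropp; lra.
Qed.

Lemma vder_eq_on_J l p q s : 0 < l -> inJ l s -> vdiff p s -> vdiff q s ->
  (forall t, inJ l t -> p t = q t) -> vder p s = vder q s.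
Proof.
  intros Hl Hs (p1 & p2 & p3) (q1 & q2 & q3) Hpq.
  unfold vder; f_equal; apply (Derive_eq_on_J l); auto; intros t Ht; rewrite Hpq; auto.
Qed.

Lemma Derive_comp_opp (f : R -> R) x : ex_derive f (- x) ->
  Derive (fun t => f (- t)) x = - Derive f (- x).
Proof.
  intros Hf; apply is_derive_unique; auto_derive; [exact Hf | change (fun y => f y) with f; simpl; ring].
Qed.

Lemma Derive_even_on_J l (f : R -> R) s : 0 < l -> inJ l s -> (forall t, ex_derive f t) ->
  (forall t, inJ l t -> f (- t) = f t) -> Derive f (- s) = - Derive f s.
Proof.
  intros Hl Hs Hf Heven.
  rewrite <- (Derive_eq_on_J l (fun t => f (- t)) f s Hl Hs), Derive_comp_opp; auto; [ring|].
  apply (ex_derive_comp f Ropp); [apply Hf | auto_derive; exact I].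
Qed.

Lemma is_derive_coord_affine (a k1 k2 k3 : R) (f g h : R -> R) (x : R) :
  ex_derive f x -> ex_derive g x -> ex_derive h x ->
  is_derive (fun t => a + (f t * k1 + g t * k2 + h t * k3)) x
    (Derive f x * k1 + Derive g x * k2 + Derive h x * k3).
Proof. intros Hf Hg Hh; auto_derive; auto; rewrite !Rmult_1_l; reflexivity. Qed.

Lemma vdiff_affine b E1 E2 E3 p s : vdiff p s -> vdiff (fun t => affine b E1 E2 E3 (p t)) s.
Proof.
  intros (h1 & h2 & h3); repeat split; eexists;
  apply (is_derive_coord_affine _ _ _ _ (fun t => v1 (p t)) (fun t => v2 (p t)) (fun t => v3 (p t)));
  assumption.
Qed.

Lemma vder_affine b E1 E2 E3 p s : vdiff p s ->
  vder (fun t => affine b E1 E2 E3 (p t)) s = lincomb E1 E2 E3 (vder p s).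
Proof.
  intros (h1 & h2 & h3); unfold vder; apply V3_ext; simpl; apply is_derive_unique;
  apply (is_derive_coord_affine _ _ _ _ (fun t => v1 (p t)) (fun t => v2 (p t)) (fun t => v3 (p t)));
  assumption.
Qed.

Lemma vdiff_comp_opp p s : vdiff p (- s) -> vdiff (fun t => p (- t)) s.
Proof.
  intros (h1 & h2 & h3); repeat split;
  [apply (ex_derive_comp (fun t => v1 (p t))) | apply (ex_derive_comp (fun t => v2 (p t)))
  | apply (ex_derive_comp (fun t => v3 (p t)))]; auto; auto_derive; auto.
Qed.

Lemma vder_comp_opp p s : vdiff p (- s) ->
  vder (fun t => p (- t)) s = vscale (-1) (vder p (- s)).
Proof.
  intros (h1 & h2 & h3); unfold vder, vscale; apply V3_ext; simpl;
  rewrite (Derive_comp_opp (fun t => _ (p t))) by assumption; ring.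
Qed.

Lemma is_derive_dot p u s : vdiff p s ->
  is_derive (fun t => dot (p t) u) s (dot (vder p s) u).
Proof.
  intros (h1 & h2 & h3).
  apply (is_derive_ext (fun t => 0 + (v1 (p t) * v1 u + v2 (p t) * v2 u + v3 (p t) * v3 u)));
    [intros t; unfold dot; simpl; ring|].
  apply (is_derive_coord_affine _ _ _ _ (fun t => v1 (p t)) (fun t => v2 (p t)) (fun t => v3 (p t)));
  assumption.
Qed.

(** * Frenet frame and rulings of a normal form *)

Lemma orthonormal_frame t x : vnorm t = 1 -> x <> v0 -> dot t x = 0 ->
  orthonormal t (cross (vscale (/ vnorm x) x) t) (vscale (/ vnorm x) x) /\
  det3 t (cross (vscale (/ vnorm x) x) t) (vscale (/ vnorm x) x) = 1.
Proof.
  intros Ht Hx Htx.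
  pose proof (vnorm_pos x Hx) as Hn; pose proof (vnorm_sqr x) as Hs.
  set (b := vscale (/ vnorm x) x).
  assert (Htt : dot t t = 1) by (rewrite <- vnorm_sqr, Ht; ring).
  assert (Hbb : dot b b = 1).
  { transitivity (/ vnorm x * / vnorm x * dot x x); [unfold b; vec_ring|].
    rewrite <- Hs; field; lra. }
  assert (Htb : dot t b = 0).
  { transitivity (/ vnorm x * dot t x); [unfold b; vec_ring|]; rewrite Htx; ring. }
  assert (Hcross : forall u w, dot (cross u w) (cross u w) = dot u u * dot w w - dot u w ^ 2)
    by (intros; vec_ring).
  repeat split.
  - exact Htt.
  - rewrite Hcross, Hbb, Htt, dot_comm, Htb; ring.
  - exact Hbb.
  - vec_ring.
  - exact Htb.
  - vec_ring.
  - transitivity (dot b b * dot t t - dot t b ^ 2); [vec_ring|].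
    rewrite Hbb, Htt, Htb; ring.
Qed.

Section ArcLength.
Variables (l : R) (c : R -> V3).
Hypothesis Hc : arclength_curve l c.

Lemma arclength_l_pos : 0 < l.
Proof. apply Hc. Qed.

Lemma arclength_smooth : smooth_curve c.
Proof. apply Hc. Qed.

Lemma arclength_unit s : inJ l s -> vnorm (vder c s) = 1.
Proof. apply Hc. Qed.

Lemma arclength_inj s t : inJ l s -> inJ l t -> c s = c t -> s = t.
Proof. apply Hc. Qed.

Lemma arclength_curvature_pos s : inJ l s -> 0 < curvature c s.
Proof. apply Hc. Qed.

Lemma arclength_vdiff s : vdiff c s.
Proof. apply smooth_curve_vdiff, arclength_smooth. Qed.

Lemma arclength_vdiff_d1 s : vdiff (vder c) s.
Proof. apply smooth_curve_vdiff, smooth_curve_vder, arclength_smooth. Qed.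

Lemma arclength_vdiff_d2 s : vdiff (vder (vder c)) s.
Proof. apply smooth_curve_vdiff, smooth_curve_vder, smooth_curve_vder, arclength_smooth. Qed.

Lemma arclength_cross_nonzero s : inJ l s -> cross (Defs.d1 c s) (Defs.d2 c s) <> v0.
Proof.
  intros Hs E; pose proof (arclength_curvature_pos s Hs) as H.
  unfold curvature in H; rewrite E in H.
  rewrite vnorm_v0 in H.
  unfold Rdiv in H; rewrite Rmult_0_l in H; lra.
Qed.

Lemma arclength_tangent s : inJ l s -> tangent c s = vder c s.
Proof.
  intros Hs; unfold tangent, Defs.d1; rewrite arclength_unit, Rinv_1 by exact Hs; vec_ring.
Qed.

Lemma frenet_orthonormal s : inJ l s ->
  orthonormal (tangent c s) (principal_normal c s) (binormal c s) /\
  det3 (tangent c s) (principal_normal c s) (binormal c s) = 1.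
Proof.
  intros Hs; unfold principal_normal, binormal; rewrite arclength_tangent by exact Hs.
  apply orthonormal_frame; [apply arclength_unit, Hs | apply arclength_cross_nonzero, Hs | vec_ring].
Qed.

End ArcLength.

Definition frenet (c : R -> V3) (s : R) (X : V3) : V3 :=
  lincomb (tangent c s) (principal_normal c s) (binormal c s) X.

Definition ruling_coords (a b : R) : V3 := mkV3 (cos b) (sin b * cos a) (sin b * sin a).

Lemma xi_nf_frenet c alpha s :
  xi_nf c alpha s = frenet c s (ruling_coords (alpha s) (beta_nf c alpha s)).
Proof. unfold xi_nf, frenet, ruling_coords; vec_ring. Qed.

Lemma vnorm_ruling_coords a b : vnorm (ruling_coords a b) = 1.
Proof.
  rewrite <- sqrt_1; unfold vnorm; f_equal; unfold ruling_coords, dot; simpl.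
  pose proof (sin2_cos2 a); pose proof (sin2_cos2 b); unfold Rsqr in *; nra.
Qed.

Lemma vnorm_xi_nf l c alpha s : arclength_curve l c -> inJ l s -> vnorm (xi_nf c alpha s) = 1.
Proof.
  intros Hc Hs; rewrite xi_nf_frenet; unfold frenet.
  rewrite vnorm_lincomb by apply (frenet_orthonormal l c Hc s Hs); apply vnorm_ruling_coords.
Qed.

Lemma det3_frenet l c s X Y : arclength_curve l c -> inJ l s ->
  det3 (frenet c s X) (vder c s) (frenet c s Y) = v3 X * v2 Y - v2 X * v3 Y.
Proof.
  intros Hc Hs; destruct (frenet_orthonormal l c Hc s Hs) as [_ HD].
  replace (vder c s) with (frenet c s e1)
    by (unfold frenet; rewrite <- (arclength_tangent l c Hc s Hs); apply lincomb_basis).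
  unfold frenet; rewrite det3_lincomb, HD; vec_ring.
Qed.

Lemma sin_beta_nf_pos c alpha s : 0 < sin (beta_nf c alpha s).
Proof.
  unfold beta_nf; rewrite sin_shift; pose proof (atan_bound (cot_beta c alpha s)).
  apply cos_gt_0; lra.
Qed.

Lemma congruent_small_of_pointwise l F G T (rho : R -> R) : isometry3 T ->
  (forall s, inJ l s -> inJ l (rho s)) -> (forall s, rho (rho s) = s) ->
  (forall s v, inJ l s -> T (F s v) = G (rho s) v) -> congruent_small l F G.
Proof.
  intros HT HJ Hrho HF; exists T, 1; split; [exact HT | split; [lra|]].
  intros eps _ p; split.
  - intros (q & (s & v & (Hs & Hv) & ->) & ->).
    exists (rho s), v; rewrite HF by exact Hs; split; [split; [apply HJ, Hs | exact Hv] | reflexivity].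
  - intros (s & v & (Hs & Hv) & ->); exists (F (rho s) v); split.
    + exists (rho s), v; split; [split; [apply HJ, Hs | exact Hv] | reflexivity].
    + rewrite HF, Hrho by (apply HJ, Hs); reflexivity.
Qed.

(** * Planar curves *)

Lemma vder_orthogonal l p u k s : 0 < l -> inJ l s -> vdiff p s ->
  (forall t, inJ l t -> dot (p t) u = k) -> dot (vder p s) u = 0.
Proof.
  intros Hl Hs Hp Hk; rewrite <- (is_derive_unique _ _ _ (is_derive_dot p u s Hp)).
  rewrite (Derive_eq_on_J l _ (fun _ => k)); auto using Derive_const, ex_derive_const.
  eexists; apply is_derive_dot, Hp.
Qed.

Definition mirror (u y : V3) : V3 := vsub y (vscale (2 * dot y u / dot u u) u).

Section Mirror.
Variable u : V3.
Hypothesis Hu : u <> v0.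

Let Huu : 0 < dot u u.
Proof. rewrite <- vnorm_sqr; pose proof (vnorm_pos u Hu); nra. Qed.

Lemma vnorm_mirror y : vnorm (mirror u y) = vnorm y.
Proof. unfold vnorm; f_equal; unfold mirror; unfold dot, vsub, vscale in *; simpl in *; field; lra. Qed.

Lemma mirror_linear a v b : mirror u (vadd a (vscale v b)) = vadd (mirror u a) (vscale v (mirror u b)).
Proof. unfold mirror; apply V3_ext; unfold dot, vadd, vsub, vscale in *; simpl in *; field; lra. Qed.

Lemma mirror_scale k y : mirror u (vscale k y) = vscale k (mirror u y).
Proof. unfold mirror; apply V3_ext; unfold dot, vsub, vscale in *; simpl in *; field; lra. Qed.

Lemma mirror_lincomb E1 E2 E3 x :
  mirror u (lincomb E1 E2 E3 x) = lincomb (mirror u E1) (mirror u E2) (mirror u E3) x.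
Proof. unfold mirror, lincomb; apply V3_ext; unfold dot, vadd, vsub, vscale in *; simpl in *; field; lra. Qed.

Lemma mirror_fixed y : dot y u = 0 -> mirror u y = y.
Proof. intros H; unfold mirror; rewrite H; vec_ring. Qed.

Lemma mirror_cross a b : mirror u (cross a b) = vscale (-1) (cross (mirror u a) (mirror u b)).
Proof. unfold mirror; apply V3_ext; unfold dot, cross, vsub, vscale in *; simpl in *; field; lra. Qed.

End Mirror.

Section Planar.
Variables (l : R) (c : R -> V3) (alpha : R -> R) (p0 u : V3).
Hypothesis Hc : arclength_curve l c.
Hypothesis Hu : u <> v0.
Hypothesis Hplane : forall s, inJ l s -> dot (vsub (c s) p0) u = 0.

Lemma planar_derivatives s : inJ l s ->
  dot (Defs.d1 c s) u = 0 /\ dot (Defs.d2 c s) u = 0 /\ dot (Defs.d3 c s) u = 0.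
Proof.
  pose proof (arclength_l_pos l c Hc) as Hl.
  assert (H1 : forall t, inJ l t -> dot (vder c t) u = 0).
  { intros t Ht; apply (vder_orthogonal l c u (dot p0 u) t Hl Ht (arclength_vdiff l c Hc t)).
    intros r Hr; pose proof (Hplane r Hr) as H; unfold dot, vsub in *; simpl in *; lra. }
  assert (H2 : forall t, inJ l t -> dot (vder (vder c) t) u = 0)
    by (intros t Ht; exact (vder_orthogonal l _ u 0 t Hl Ht (arclength_vdiff_d1 l c Hc t) H1)).
  intros Hs; split; [|split]; [apply H1, Hs | apply H2, Hs |].
  exact (vder_orthogonal l _ u 0 s Hl Hs (arclength_vdiff_d2 l c Hc s) H2).
Qed.

Lemma planar_torsion s : inJ l s -> torsion c s = 0.
Proof.
  intros Hs; destruct (planar_derivatives s Hs) as (H1 & H2 & H3).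
  unfold torsion; destruct (Req_dec (det3 (Defs.d1 c s) (Defs.d2 c s) (Defs.d3 c s)) 0) as [->|HD].
  - unfold Rdiv; ring.
  - exfalso; apply Hu, (orthogonal_to_frame_eq0 u _ _ _ HD); rewrite dot_comm; assumption.
Qed.

Lemma planar_mirror_frenet s : inJ l s ->
  mirror u (tangent c s) = tangent c s /\ mirror u (principal_normal c s) = principal_normal c s /\
  mirror u (binormal c s) = vscale (-1) (binormal c s).
Proof.
  intros Hs; destruct (planar_derivatives s Hs) as (H1 & H2 & _).
  assert (Ht : mirror u (tangent c s) = tangent c s)
    by (apply mirror_fixed; rewrite (arclength_tangent l c Hc s Hs); exact H1).
  assert (Hb : mirror u (binormal c s) = vscale (-1) (binormal c s)).
  { unfold binormal; rewrite mirror_scale, mirror_cross, !mirror_fixed by assumption; vec_ring. }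
  repeat split; [exact Ht | | exact Hb].
  unfold principal_normal; rewrite mirror_cross, Ht, Hb by assumption; vec_ring.
Qed.

Lemma planar_mirror_xi s : inJ l s -> mirror u (xi_nf c alpha s) = xi_nf c (fun t => - alpha t) s.
Proof.
  intros Hs; destruct (planar_mirror_frenet s Hs) as (Ht & Hn & Hb).
  assert (Hcot : cot_beta c (fun t => - alpha t) s = cot_beta c alpha s).
  { unfold cot_beta; rewrite Derive_opp, planar_torsion, sin_neg by assumption.
    rewrite Ropp_mult_distr_r_reverse; unfold Rdiv; rewrite Rinv_opp; ring. }
  rewrite !xi_nf_frenet; unfold frenet; rewrite mirror_lincomb, Ht, Hn, Hb by assumption.
  unfold beta_nf; rewrite Hcot; unfold ruling_coords; cbv beta; rewrite cos_neg, sin_neg; vec_ring.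
Qed.

Lemma planar_congruent_dual :
  congruent_small l (normal_form c alpha) (dual_normal_form c alpha).
Proof.
  apply (congruent_small_of_pointwise l _ _ (fun x => vadd p0 (mirror u (vsub x p0))) (fun s => s));
    auto.
  - intros x y; unfold dist3; replace (vsub (vadd p0 (mirror u (vsub x p0))) (vadd p0 (mirror u (vsub y p0))))
      with (mirror u (vsub x y)) by (unfold mirror; vec_ring).
    apply vnorm_mirror, Hu.
  - intros s v Hs; unfold dual_normal_form, normal_form.
    replace (vsub (vadd (c s) (vscale v (xi_nf c alpha s))) p0)
      with (vadd (vsub (c s) p0) (vscale v (xi_nf c alpha s))) by vec_ring.
    rewrite mirror_linear, mirror_fixed, planar_mirror_xi by auto; vec_ring.
Qed.

End Planar.

(** * Curves reversed by an isometry *)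

Lemma vder_of_reflection l p q b E1 E2 E3 k s : 0 < l -> inJ l s ->
  (forall t, vdiff p t) -> (forall t, vdiff q t) ->
  (forall t, inJ l t -> q (- t) = vadd b (vscale k (lincomb E1 E2 E3 (p t)))) ->
  vder q (- s) = vscale (- k) (lincomb E1 E2 E3 (vder p s)).
Proof.
  intros Hl Hs Hp Hq Hpq.
  assert (Hk : forall x, vadd b (vscale k (lincomb E1 E2 E3 x)) =
                         affine b (vscale k E1) (vscale k E2) (vscale k E3) x) by (intros; vec_ring).
  assert (H : vder (fun t => q (- t)) s =
              vder (fun t => affine b (vscale k E1) (vscale k E2) (vscale k E3) (p t)) s).
  { apply (vder_eq_on_J l); auto using vdiff_comp_opp, vdiff_affine.
    intros t Ht; rewrite Hpq, Hk by exact Ht; reflexivity. }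
  rewrite vder_comp_opp, vder_affine in H by auto.
  transitivity (vscale (-1) (vscale (-1) (vder q (- s)))); [vec_ring|].
  rewrite H; vec_ring.
Qed.

Section Reversal.
Variables (l : R) (c : R -> V3) (b E1 E2 E3 : V3).
Hypothesis Hc : arclength_curve l c.
Hypothesis HO : orthonormal E1 E2 E3.
Hypothesis Hrev : forall s, inJ l s -> c (- s) = affine b E1 E2 E3 (c s).

Let L := lincomb E1 E2 E3.
Let D := det3 E1 E2 E3.
Let Hl := arclength_l_pos l c Hc.

Let Hv0 := arclength_vdiff l c Hc.
Let Hv1 := arclength_vdiff_d1 l c Hc.
Let Hv2 := arclength_vdiff_d2 l c Hc.

Lemma reversal_d1 s : inJ l s -> Defs.d1 c (- s) = vscale (-1) (L (Defs.d1 c s)).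
Proof.
  intros Hs; unfold Defs.d1, L.
  rewrite (vder_of_reflection l c c b E1 E2 E3 1 s Hl Hs Hv0 Hv0); [vec_ring|].
  intros t Ht; rewrite Hrev by exact Ht; vec_ring.
Qed.

Lemma reversal_d2 s : inJ l s -> Defs.d2 c (- s) = L (Defs.d2 c s).
Proof.
  intros Hs; unfold Defs.d2, L.
  rewrite (vder_of_reflection l _ _ v0 E1 E2 E3 (-1) s Hl Hs Hv1 Hv1); [vec_ring|].
  intros t Ht; pose proof (reversal_d1 t Ht) as H; unfold Defs.d1, L in H; rewrite H; vec_ring.
Qed.

Lemma reversal_d3 s : inJ l s -> Defs.d3 c (- s) = vscale (-1) (L (Defs.d3 c s)).
Proof.
  intros Hs; unfold Defs.d3, L.
  rewrite (vder_of_reflection l _ _ v0 E1 E2 E3 1 s Hl Hs Hv2 Hv2); [vec_ring|].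
  intros t Ht; pose proof (reversal_d2 t Ht) as H; unfold Defs.d2, L in H; rewrite H; vec_ring.
Qed.

Let HD : D = 1 \/ D = -1.
Proof. apply orthonormal_det3, HO. Qed.

Let vnorm_L x : vnorm (L x) = vnorm x.
Proof. apply vnorm_lincomb, HO. Qed.

Lemma reversal_cross s : inJ l s ->
  cross (Defs.d1 c (- s)) (Defs.d2 c (- s)) = vscale (- D) (L (cross (Defs.d1 c s) (Defs.d2 c s))).
Proof.
  intros Hs; rewrite reversal_d1, reversal_d2, cross_scale_l by exact Hs.
  unfold L; rewrite cross_lincomb by exact HO; unfold D; vec_ring.
Qed.

Lemma vnorm_reversal_cross s : inJ l s ->
  vnorm (cross (Defs.d1 c (- s)) (Defs.d2 c (- s))) = vnorm (cross (Defs.d1 c s) (Defs.d2 c s)).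
Proof.
  intros Hs; rewrite reversal_cross, vnorm_scale, vnorm_L, Rabs_Ropp by exact Hs.
  replace (Rabs D) with 1 by (destruct HD as [H | H]; rewrite H; unfold Rabs; destruct Rcase_abs; lra).
  ring.
Qed.

Lemma reversal_curvature s : inJ l s -> curvature c (- s) = curvature c s.
Proof.
  intros Hs; unfold curvature; fold (Defs.d1 c) (Defs.d2 c).
  rewrite vnorm_reversal_cross, reversal_d1, vnorm_opp, vnorm_L by exact Hs; reflexivity.
Qed.

Lemma reversal_torsion s : inJ l s -> torsion c (- s) = D * torsion c s.
Proof.
  intros Hs; unfold torsion; fold (Defs.d1 c) (Defs.d2 c) (Defs.d3 c).
  rewrite vnorm_reversal_cross, reversal_d1, reversal_d2, reversal_d3 by exact Hs.
  replace (det3 (vscale (-1) (L (Defs.d1 c s))) (L (Defs.d2 c s)) (vscale (-1) (L (Defs.d3 c s))))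
    with (det3 (L (Defs.d1 c s)) (L (Defs.d2 c s)) (L (Defs.d3 c s))) by vec_ring.
  unfold L, D; rewrite det3_lincomb; unfold Rdiv; ring.
Qed.

Lemma reversal_tangent s : inJ l s -> tangent c (- s) = vscale (-1) (L (tangent c s)).
Proof.
  intros Hs; unfold tangent; fold (Defs.d1 c).
  rewrite reversal_d1, vnorm_opp, vnorm_L by exact Hs.
  unfold L; rewrite lincomb_scale; vec_ring.
Qed.

Lemma reversal_binormal s : inJ l s -> binormal c (- s) = vscale (- D) (L (binormal c s)).
Proof.
  intros Hs; unfold binormal; fold (Defs.d1 c) (Defs.d2 c).
  rewrite vnorm_reversal_cross, reversal_cross by exact Hs.
  unfold L; rewrite lincomb_scale; vec_ring.
Qed.

Lemma reversal_normal s : inJ l s -> principal_normal c (- s) = L (principal_normal c s).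
Proof.
  intros Hs; unfold principal_normal.
  rewrite reversal_binormal, reversal_tangent, cross_scale_l, cross_scale_r by exact Hs.
  unfold L; rewrite cross_lincomb by exact HO; fold D.
  destruct HD as [HD1 | HD1]; rewrite HD1; vec_ring.
Qed.

Lemma reversal_frenet s X : inJ l s ->
  L (frenet c s X) = frenet c (- s) (mkV3 (- v1 X) (v2 X) (- D * v3 X)).
Proof.
  intros Hs; unfold frenet.
  rewrite reversal_tangent, reversal_normal, reversal_binormal by exact Hs.
  unfold L; destruct HD as [H | H]; rewrite H; vec_ring.
Qed.

Lemma reversal_det_rulings alpha s : inJ l s ->
  det3 (L (xi_nf c alpha s)) (vder c (- s)) (xi_nf c (fun t => - alpha t) (- s)) =
  sin (beta_nf c alpha s) * sin (beta_nf c (fun t => - alpha t) (- s)) *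
  (sin (alpha (- s)) * cos (alpha s) - D * sin (alpha s) * cos (alpha (- s))).
Proof.
  intros Hs; rewrite !xi_nf_frenet, reversal_frenet by exact Hs.
  rewrite (det3_frenet l) by auto using inJ_opp.
  unfold ruling_coords; simpl; rewrite cos_neg, sin_neg; ring.
Qed.

Section EvenAngle.
Variable alpha : R -> R.
Hypothesis Ha : smooth_fun alpha.
Hypothesis HD1 : det3 E1 E2 E3 = 1.
Hypothesis Heven : forall s, inJ l s -> alpha (- s) = alpha s.

Lemma symmetric_cot_beta s : inJ l s ->
  cot_beta c (fun t => - alpha t) (- s) = - cot_beta c alpha s.
Proof.
  intros Hs; unfold cot_beta.
  rewrite Derive_opp, (Derive_even_on_J l alpha s Hl Hs) by auto using smooth_ex_derive.
  rewrite reversal_torsion, reversal_curvature, Heven, sin_neg by exact Hs.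
  unfold D; rewrite HD1, Ropp_mult_distr_r_reverse; unfold Rdiv; rewrite Rinv_opp; ring.
Qed.

Lemma symmetric_xi_dual s : inJ l s ->
  xi_nf c (fun t => - alpha t) (- s) = L (xi_nf c alpha s).
Proof.
  intros Hs; rewrite !xi_nf_frenet, reversal_frenet by exact Hs.
  unfold beta_nf; rewrite symmetric_cot_beta, atan_opp by exact Hs.
  set (B := PI / 2 - atan (cot_beta c alpha s)).
  replace (PI / 2 - - atan (cot_beta c alpha s)) with (PI - B) by (unfold B; lra).
  unfold ruling_coords, D; cbv beta.
  replace (cos (PI - B)) with (- cos B) by (rewrite cos_minus, cos_PI, sin_PI; ring).
  rewrite HD1, sin_PI_x, cos_neg, sin_neg, Heven by exact Hs.
  f_equal; apply V3_ext; simpl; ring.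
Qed.

Lemma symmetric_congruent_dual : congruent_small l (normal_form c alpha) (dual_normal_form c alpha).
Proof.
  apply (congruent_small_of_pointwise l _ _ (affine b E1 E2 E3) Ropp);
    [apply affine_isometry, HO | apply inJ_opp | intros; ring |].
  intros s v Hs; unfold dual_normal_form, normal_form.
  rewrite symmetric_xi_dual, Hrev by exact Hs; unfold L; vec_ring.
Qed.

End EvenAngle.

End Reversal.

(** * Continuity of the Frenet apparatus *)

Ltac split_continuity := repeat match goal with
  | |- continuous (fun t => @?A t + @?B t) _ => apply (continuous_plus A B)
  | |- continuous (fun t => @?A t - @?B t) _ => apply (continuous_minus A B)
  | |- continuous (fun t => @?A t * @?B t) _ => apply (continuous_mult A B)
  | |- continuous (fun t => - @?A t) _ => apply (continuous_opp A)
  | |- continuous (fun t => sqrt (@?A t)) _ => apply (continuous_sqrt_comp A)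
  | |- continuous (fun t => cos (@?A t)) _ => apply (continuous_cos_comp A)
  | |- continuous (fun t => sin (@?A t)) _ => apply (continuous_sin_comp A)
  | |- continuous (fun t => atan (@?A t)) _ => apply (continuous_atan_comp A)
  | |- continuous (fun _ => _) _ => apply continuous_const
  end.

Lemma vcont_vadd p q x : vcont p x -> vcont q x -> vcont (fun t => vadd (p t) (q t)) x.
Proof. intros (p1 & p2 & p3) (q1 & q2 & q3); repeat split; simpl; split_continuity; auto. Qed.

Lemma vcont_vscale (k : R -> R) p x :
  continuous k x -> vcont p x -> vcont (fun t => vscale (k t) (p t)) x.
Proof. intros Hk (p1 & p2 & p3); repeat split; simpl; split_continuity; auto. Qed.

Lemma vcont_cross p q x : vcont p x -> vcont q x -> vcont (fun t => cross (p t) (q t)) x.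
Proof. intros (p1 & p2 & p3) (q1 & q2 & q3); repeat split; simpl; split_continuity; auto. Qed.

Lemma continuous_dot p q x : vcont p x -> vcont q x -> continuous (fun t => dot (p t) (q t)) x.
Proof. intros (p1 & p2 & p3) (q1 & q2 & q3); unfold dot; split_continuity; auto. Qed.

Lemma continuous_vnorm p x : vcont p x -> continuous (fun t => vnorm (p t)) x.
Proof. intros Hp; apply (continuous_sqrt_comp (fun t => dot (p t) (p t))), continuous_dot; auto. Qed.

Lemma continuous_det3 p q r x : vcont p x -> vcont q x -> vcont r x ->
  continuous (fun t => det3 (p t) (q t) (r t)) x.
Proof. intros; apply continuous_dot; [|apply vcont_cross]; auto. Qed.

Section FrenetContinuity.
Variables (l : R) (c : R -> V3) (x : R).
Hypothesis Hc : arclength_curve l c.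
Hypothesis Hx : inJ l x.

Let vcont_d1 : vcont (Defs.d1 c) x.
Proof. apply smooth_curve_vcont, smooth_curve_vder, (arclength_smooth l c Hc). Qed.
Let vcont_d2 : vcont (Defs.d2 c) x.
Proof. apply smooth_curve_vcont, smooth_curve_vder, smooth_curve_vder, (arclength_smooth l c Hc). Qed.
Let vcont_d3 : vcont (Defs.d3 c) x.
Proof.
  apply smooth_curve_vcont, smooth_curve_vder, smooth_curve_vder, smooth_curve_vder,
    (arclength_smooth l c Hc).
Qed.
Let vcont_d1xd2 : vcont (fun t => cross (Defs.d1 c t) (Defs.d2 c t)) x.
Proof. apply vcont_cross; assumption. Qed.
Let d1_nonzero : vnorm (Defs.d1 c x) <> 0.
Proof. unfold Defs.d1; rewrite (arclength_unit l c Hc x Hx); lra. Qed.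
Let d1xd2_nonzero : vnorm (cross (Defs.d1 c x) (Defs.d2 c x)) <> 0.
Proof. apply Rgt_not_eq, vnorm_pos, (arclength_cross_nonzero l c Hc x Hx). Qed.

Lemma continuous_curvature : continuous (curvature c) x.
Proof.
  unfold curvature, Rdiv; apply (continuous_mult (fun t => vnorm (cross (Defs.d1 c t) (Defs.d2 c t)))
                                  (fun t => / vnorm (Defs.d1 c t) ^ 3)).
  - apply continuous_vnorm; assumption.
  - apply (continuous_Rinv_comp (fun t => vnorm (Defs.d1 c t) ^ 3)); [|apply pow_nonzero; assumption].
    apply (continuous_ext (fun t => vnorm (Defs.d1 c t) * (vnorm (Defs.d1 c t) * vnorm (Defs.d1 c t))));
      [intros t; simpl; ring|].
    pose proof (continuous_vnorm _ _ vcont_d1); split_continuity; assumption.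
Qed.

Lemma continuous_torsion : continuous (torsion c) x.
Proof.
  unfold torsion, Rdiv; apply (continuous_mult (fun t => det3 (Defs.d1 c t) (Defs.d2 c t) (Defs.d3 c t))
                                  (fun t => / vnorm (cross (Defs.d1 c t) (Defs.d2 c t)) ^ 2)).
  - apply continuous_det3; assumption.
  - apply (continuous_Rinv_comp (fun t => vnorm (cross (Defs.d1 c t) (Defs.d2 c t)) ^ 2));
      [|apply pow_nonzero; assumption].
    apply (continuous_ext (fun t => vnorm (cross (Defs.d1 c t) (Defs.d2 c t)) *
                                    vnorm (cross (Defs.d1 c t) (Defs.d2 c t)))); [intros t; simpl; ring|].
    pose proof (continuous_vnorm _ _ vcont_d1xd2); split_continuity; assumption.
Qed.

Lemma vcont_tangent : vcont (tangent c) x.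
Proof.
  apply (vcont_vscale (fun t => / vnorm (Defs.d1 c t)) (Defs.d1 c)); [|assumption].
  apply (continuous_Rinv_comp (fun t => vnorm (Defs.d1 c t))); [apply continuous_vnorm|]; assumption.
Qed.

Lemma vcont_binormal : vcont (binormal c) x.
Proof.
  apply (vcont_vscale (fun t => / vnorm (cross (Defs.d1 c t) (Defs.d2 c t)))); [|assumption].
  apply (continuous_Rinv_comp (fun t => vnorm (cross (Defs.d1 c t) (Defs.d2 c t))));
    [apply continuous_vnorm|]; assumption.
Qed.

Lemma vcont_principal_normal : vcont (principal_normal c) x.
Proof. apply (vcont_cross (binormal c) (tangent c)); [apply vcont_binormal | apply vcont_tangent]. Qed.

Lemma vcont_xi_nf alpha : smooth_fun alpha -> sin (alpha x) <> 0 -> vcont (xi_nf c alpha) x.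
Proof.
  intros Ha Hsin.
  assert (Hal : continuous alpha x) by (apply smooth_continuous, Ha).
  assert (Hcot : continuous (cot_beta c alpha) x).
  { unfold cot_beta, Rdiv.
    apply (continuous_mult (fun t => Derive alpha t + torsion c t)
                           (fun t => / (curvature c t * sin (alpha t)))).
    - apply (continuous_plus (Derive alpha) (torsion c));
        [apply smooth_continuous, smooth_Derive, Ha | apply continuous_torsion].
    - apply (continuous_Rinv_comp (fun t => curvature c t * sin (alpha t)));
        [apply (continuous_mult (curvature c) (fun t => sin (alpha t)));
         [apply continuous_curvature | apply (continuous_sin_comp alpha), Hal]|].
      apply Rmult_integral_contrapositive; split; [|exact Hsin].
      apply Rgt_not_eq, (arclength_curvature_pos l c Hc x Hx). }
  assert (Hbeta : continuous (beta_nf c alpha) x)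
    by (unfold beta_nf; split_continuity; exact Hcot).
  unfold xi_nf; apply vcont_vadd.
  - apply (vcont_vscale (fun t => cos (beta_nf c alpha t)));
      [apply (continuous_cos_comp (beta_nf c alpha)), Hbeta | apply vcont_tangent].
  - apply (vcont_vscale (fun t => sin (beta_nf c alpha t)));
      [apply (continuous_sin_comp (beta_nf c alpha)), Hbeta | apply vcont_vadd].
    + apply (vcont_vscale (fun t => cos (alpha t)));
        [apply (continuous_cos_comp alpha), Hal | apply vcont_principal_normal].
    + apply (vcont_vscale (fun t => sin (alpha t)));
        [apply (continuous_sin_comp alpha), Hal | apply vcont_binormal].
Qed.

End FrenetContinuity.

(** * Chords of an arc-length curve *)

Lemma min_pos_on_J l (f : R -> R) : 0 < l -> (forall t, inJ l t -> continuous f t) ->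
  (forall t, inJ l t -> 0 < f t) -> exists m, 0 < m /\ forall t, inJ l t -> m <= f t.
Proof.
  intros Hl Hcont Hpos.
  destruct (continuity_ab_min f (- l / 2) (l / 2)) as (t0 & Hmin & Ht0); [lra| |].
  - intros t Ht; apply continuity_pt_filterlim, Hcont, Ht.
  - exists (f t0); split; [apply Hpos, Ht0 | intros t Ht; apply Hmin, Ht].
Qed.

Section CurveGeometry.
Variables (l : R) (c : R -> V3).
Hypothesis Hc : arclength_curve l c.

Let Hl := arclength_l_pos l c Hc.

Let vcont_chord p t : vcont (fun r => vsub (c r) p) t.
Proof.
  destruct (smooth_curve_vcont c t (arclength_smooth l c Hc)) as (h1 & h2 & h3).
  repeat split; simpl; split_continuity; assumption.
Qed.

Lemma curve_local_bilipschitz s : inJ l s ->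
  locally s (fun t => Rabs (t - s) / 2 <= vnorm (vsub (c t) (c s)) <= 2 * Rabs (t - s)).
Proof.
  intros Hs; generalize (vder_approx c s (arclength_vdiff l c Hc s) (1 / 2) ltac:(lra)).
  apply filter_imp; intros t Ht.
  set (e := vder c s) in *; set (Rm := vsub (vsub (c t) (c s)) (vscale (t - s) e)) in *.
  assert (He : vnorm (vscale (t - s) e) = Rabs (t - s))
    by (rewrite vnorm_scale; unfold e; rewrite (arclength_unit l c Hc s Hs); ring).
  pose proof (vnorm_add_le (vscale (t - s) e) Rm) as Hup.
  pose proof (vnorm_sub_le (vsub (c t) (c s)) Rm) as Hlow.
  replace (vadd (vscale (t - s) e) Rm) with (vsub (c t) (c s)) in Hup by (unfold Rm; vec_ring).
  replace (vsub (vsub (c t) (c s)) Rm) with (vscale (t - s) e) in Hlow by (unfold Rm; vec_ring).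
  pose proof (Rabs_pos (t - s)); lra.
Qed.

Lemma curve_separated s d : inJ l s -> 0 < d ->
  exists m, 0 < m /\ forall t, inJ l t -> d <= Rabs (t - s) -> m <= vnorm (vsub (c t) (c s)).
Proof.
  intros Hs Hd.
  (* [gap t + Rabs (gap t)] vanishes exactly where [d <= Rabs (t - s)] and is positive
     elsewhere, so one minimum over J bounds the chord from below where it matters. *)
  set (gap t := d - Rabs (t - s)).
  destruct (min_pos_on_J l (fun t => vnorm (vsub (c t) (c s)) + (gap t + Rabs (gap t)))) as (m & Hm & Hmin);
    [exact Hl | | |].
  - intros t Ht; assert (Hgap : continuous gap t)
      by (unfold gap; split_continuity; apply (continuous_Rabs_comp (fun r => r - s)); split_continuity;
          apply continuous_id).
    split_continuity;
      [apply continuous_vnorm, vcont_chord | exact Hgap | apply (continuous_Rabs_comp gap), Hgap].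
  - intros t Ht; pose proof (vnorm_ge0 (vsub (c t) (c s))); pose proof (Rabs_pos (gap t)).
    destruct (Rle_lt_dec (gap t) 0) as [Hg | Hg].
    + assert (Hts : t <> s) by (intros ->; unfold gap in Hg; rewrite Rminus_diag, Rabs_R0 in Hg; lra).
      assert (0 < vnorm (vsub (c t) (c s))); [|pose proof (Rabs_maj2 (gap t)); lra].
      destruct (vnorm_ge0 (vsub (c t) (c s))) as [|Hz]; [assumption|].
      exfalso; apply Hts, (arclength_inj l c Hc t s Ht Hs), vnorm_sub_eq0; auto.
    + rewrite Rabs_pos_eq; lra.
  - exists m; split; [exact Hm|]; intros t Ht Hts.
    specialize (Hmin t Ht); rewrite Rabs_left1 in Hmin by (unfold gap; lra); lra.
Qed.

Lemma curve_bilipschitz_at s : inJ l s -> exists m, 0 < m /\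
  forall t, inJ l t -> vnorm (vsub (c t) (c s)) < m -> Rabs (t - s) <= 2 * vnorm (vsub (c t) (c s)).
Proof.
  intros Hs; destruct (proj1 (locally_Rabs _ _) (curve_local_bilipschitz s Hs)) as (d & Hd & Hloc).
  destruct (curve_separated s d Hs Hd) as (m & Hm & Hsep).
  exists m; split; [exact Hm|]; intros t Ht Hn.
  destruct (Rlt_le_dec (Rabs (t - s)) d) as [Hlt | Hge].
  - specialize (Hloc t Hlt); lra.
  - specialize (Hsep t Ht Hge); lra.
Qed.

Lemma curve_closed p : (forall ep, 0 < ep -> exists s, inJ l s /\ vnorm (vsub (c s) p) < ep) ->
  exists s, inJ l s /\ p = c s.
Proof.
  intros Hnear.
  destruct (continuity_ab_min (fun t => vnorm (vsub (c t) p)) (- l / 2) (l / 2)) as (s & Hmin & Hs);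
    [lra | intros t _; apply continuity_pt_filterlim, continuous_vnorm, vcont_chord |].
  exists s; split; [exact Hs|]; symmetry; apply vnorm_sub_eq0.
  destruct (vnorm_ge0 (vsub (c s) p)) as [Hpos | Hz]; [|auto].
  destruct (Hnear _ Hpos) as (t & Ht & Hlt); specialize (Hmin t Ht); lra.
Qed.

End CurveGeometry.

(** * Isometries mapping the curve into itself *)

Definition clamp (l x : R) : R := Rmax (- l / 2) (Rmin x (l / 2)).

Lemma clamp_inJ l x : 0 < l -> inJ l (clamp l x).
Proof. intros Hl; unfold clamp, inJ, Rmax, Rmin; repeat destruct Rle_dec; lra. Qed.

Lemma clamp_id l x : inJ l x -> clamp l x = x.
Proof. unfold clamp, inJ, Rmax, Rmin; repeat destruct Rle_dec; lra. Qed.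

Lemma clamp_lipschitz l x y : 0 < l -> Rabs (clamp l y - clamp l x) <= Rabs (y - x).
Proof.
  intros Hl; unfold clamp, Rmax, Rmin; repeat destruct Rle_dec;
  unfold Rabs; repeat destruct Rcase_abs; lra.
Qed.

Section CurveIsometry.
Variables (l : R) (c : R -> V3) (b E1 E2 E3 : V3).
Hypothesis Hc : arclength_curve l c.
Hypothesis HO : orthonormal E1 E2 E3.
Hypothesis Hmap : forall s, inJ l s -> exists t, inJ l t /\ affine b E1 E2 E3 (c s) = c t.

Let T := affine b E1 E2 E3.
Let L := lincomb E1 E2 E3.
Let Hl := arclength_l_pos l c Hc.

Let reparam_ex x : exists t, inJ l t /\ T (c (clamp l x)) = c t.
Proof. apply Hmap, clamp_inJ, Hl. Qed.

(* [T (c s) = c (reparam s)] on J.  Clamping outside J keeps [reparam] continuous on all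
   of R, as [MVT_gen] asks for two-sided continuity at the end points of J. *)
Definition reparam (x : R) : R := proj1_sig (constructive_indefinite_description _ (reparam_ex x)).

Lemma reparam_spec x : inJ l (reparam x) /\ T (c (clamp l x)) = c (reparam x).
Proof. unfold reparam; destruct constructive_indefinite_description; assumption. Qed.

Lemma reparam_inJ x : inJ l (reparam x).
Proof. apply reparam_spec. Qed.

Lemma reparam_eq s : inJ l s -> T (c s) = c (reparam s).
Proof. intros Hs; rewrite <- (clamp_id l s Hs) at 1; apply reparam_spec. Qed.

Lemma reparam_clamp x : reparam x = reparam (clamp l x).
Proof.
  apply (arclength_inj l c Hc); try apply reparam_inJ.
  rewrite <- (reparam_eq (clamp l x)) by apply clamp_inJ, Hl; symmetry; apply reparam_spec.
Qed.

Lemma reparam_chord s t : inJ l s -> inJ l t ->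
  vsub (c (reparam t)) (c (reparam s)) = L (vsub (c t) (c s)).
Proof. intros Hs Ht; rewrite <- !reparam_eq by assumption; apply affine_sub. Qed.

Lemma reparam_local_lipschitz s : inJ l s ->
  locally s (fun t => inJ l t -> Rabs (reparam t - reparam s) <= 4 * Rabs (t - s)).
Proof.
  intros Hs; destruct (curve_bilipschitz_at l c Hc (reparam s) (reparam_inJ s)) as (m & Hm & Hbil).
  generalize (filter_and _ _ (curve_local_bilipschitz l c Hc s Hs) (locally_near s (m / 4) ltac:(lra))).
  apply filter_imp; intros t (Hloc & Hnear) Ht.
  assert (Hn : vnorm (vsub (c (reparam t)) (c (reparam s))) = vnorm (vsub (c t) (c s)))
    by (rewrite reparam_chord by assumption; apply vnorm_lincomb, HO).
  specialize (Hbil (reparam t) (reparam_inJ t) ltac:(lra)); lra.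
Qed.

Lemma reparam_continuous x : continuous reparam x.
Proof.
  apply continuity_pt_filterlim, continuity_pt_locally; intros ep.
  pose proof (clamp_inJ l x Hl) as Hx.
  destruct (proj1 (locally_Rabs _ _) (reparam_local_lipschitz _ Hx)) as (d & Hd & Hlip).
  assert (Hep : 0 < ep / 4) by (pose proof (cond_pos ep); lra).
  generalize (filter_and _ _ (locally_near x d Hd) (locally_near x _ Hep)).
  apply filter_imp; intros y (Hy1 & Hy2).
  pose proof (clamp_lipschitz l x y Hl).
  rewrite (reparam_clamp y), (reparam_clamp x).
  specialize (Hlip (clamp l y) ltac:(lra) (clamp_inJ l y Hl)); lra.
Qed.

Lemma reparam_first_order s : inJ l s -> forall ep, 0 < ep ->
  locally s (fun t => inJ l t ->
    vnorm (vsub (vscale (reparam t - reparam s) (vder c (reparam s))) (vscale (t - s) (L (vder c s))))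
    <= ep * Rabs (t - s)).
Proof.
  intros Hs ep Hep.
  assert (Hfar : locally s (fun t =>
    vnorm (vsub (vsub (c (reparam t)) (c (reparam s))) (vscale (reparam t - reparam s) (vder c (reparam s))))
    <= ep / 8 * Rabs (reparam t - reparam s)))
    by exact (reparam_continuous s _
                (vder_approx c (reparam s) (arclength_vdiff l c Hc _) (ep / 8) ltac:(lra))).
  generalize (filter_and _ _ (reparam_local_lipschitz s Hs)
               (filter_and _ _ Hfar (vder_approx c s (arclength_vdiff l c Hc s) (ep / 2) ltac:(lra)))).
  apply filter_imp; intros t (Hlip & Hfar_t & Hnear_t) Ht; specialize (Hlip Ht).
  set (e := vder c (reparam s)) in *; set (D := reparam t - reparam s) in *.
  set (R1 := vsub (vsub (c (reparam t)) (c (reparam s))) (vscale D e)) in *.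
  set (R2 := vsub (vsub (c t) (c s)) (vscale (t - s) (vder c s))) in *.
  replace (vsub (vscale D e) (vscale (t - s) (L (vder c s)))) with (vsub (L R2) R1).
  - eapply Rle_trans; [apply vnorm_sub_le|]; unfold L; rewrite vnorm_lincomb by exact HO.
    assert (ep / 8 * Rabs D <= ep / 2 * Rabs (t - s)) by nra; lra.
  - pose proof (reparam_chord s t Hs Ht) as Hchord; unfold R1, R2.
    replace (c (reparam t)) with (vadd (c (reparam s)) (L (vsub (c t) (c s))))
      by (rewrite <- Hchord; vec_ring).
    unfold L; vec_ring.
Qed.

Definition reparam_rate (s : R) : R := dot (L (vder c s)) (vder c (reparam s)).

Let dot_increment s D h : inJ l s ->
  dot (vsub (vscale D (vder c (reparam s))) (vscale h (L (vder c s)))) (vder c (reparam s)) =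
  D - h * reparam_rate s.
Proof.
  intros Hs; unfold reparam_rate.
  assert (He : dot (vder c (reparam s)) (vder c (reparam s)) = 1)
    by (rewrite <- vnorm_sqr, (arclength_unit l c Hc _ (reparam_inJ s)); ring).
  transitivity (D * dot (vder c (reparam s)) (vder c (reparam s))
                - h * dot (L (vder c s)) (vder c (reparam s))); [vec_ring | rewrite He; ring].
Qed.

Lemma reparam_tangent s : inJ l s -> L (vder c s) = vscale (reparam_rate s) (vder c (reparam s)).
Proof.
  intros Hs; set (e := vder c (reparam s)); set (w := L (vder c s)); set (g := reparam_rate s).
  assert (He : vnorm e = 1) by apply (arclength_unit l c Hc _ (reparam_inJ s)).
  apply vnorm_sub_eq0, Rabs_le_all_eq0; intros ep Hep.
  destruct (proj1 (locally_Rabs _ _) (reparam_first_order s Hs (ep / 2) ltac:(lra))) as (d & Hd & H).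
  destruct (step_in_J l s d Hl Hs Hd) as (h & Hh0 & Hh & Hsh).
  specialize (H (s + h) ltac:(replace (s + h - s) with h by ring; exact Hh) Hsh).
  replace (s + h - s) with h in H by ring; fold e w in H.
  set (X := vsub (vscale (reparam (s + h) - reparam s) e) (vscale h w)) in *.
  assert (HX : Rabs (reparam (s + h) - reparam s - h * g) <= vnorm X)
    by (rewrite <- (dot_increment s) by exact Hs; apply dot_unit_le, He).
  assert (Hid : vscale h (vsub w (vscale g e)) =
                vsub (vscale (reparam (s + h) - reparam s - h * g) e) X) by (unfold X; vec_ring).
  apply (f_equal vnorm) in Hid; rewrite vnorm_scale in Hid.
  pose proof (vnorm_sub_le (vscale (reparam (s + h) - reparam s - h * g) e) X) as Htri.
  rewrite vnorm_scale, He, Rmult_1_r, <- Hid in Htri.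
  rewrite Rabs_pos_eq by apply vnorm_ge0.
  apply (Rmult_le_reg_l (Rabs h)); [apply Rabs_pos_lt, Hh0|].
  pose proof (Rabs_pos h); lra.
Qed.

Lemma reparam_rate_unit s : inJ l s -> Rabs (reparam_rate s) = 1.
Proof.
  intros Hs; pose proof (f_equal vnorm (reparam_tangent s Hs)) as H.
  unfold L in H; rewrite vnorm_lincomb, vnorm_scale, !(arclength_unit l c Hc) in H
    by (exact HO || exact Hs || apply reparam_inJ).
  lra.
Qed.

Lemma reparam_is_derive s : - l / 2 < s < l / 2 -> is_derive reparam s (reparam_rate s).
Proof.
  intros Hs; assert (HsJ : inJ l s) by (unfold inJ; lra).
  apply is_derive_of_approx; intros ep Hep.
  generalize (filter_and _ _ (reparam_first_order s HsJ ep Hep)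
                (locally_near s (Rmin (l / 2 - s) (s + l / 2)) ltac:(apply Rmin_glb_lt; lra))).
  apply filter_imp; intros t (H & Hnear).
  assert (Ht : inJ l t).
  { pose proof (Rmin_l (l / 2 - s) (s + l / 2)); pose proof (Rmin_r (l / 2 - s) (s + l / 2)).
    unfold inJ; revert Hnear; unfold Rabs; destruct Rcase_abs; intros; lra. }
  rewrite <- (dot_increment s) by exact HsJ.
  eapply Rle_trans; [apply dot_unit_le, (arclength_unit l c Hc _ (reparam_inJ s)) | apply H, Ht].
Qed.

Lemma reparam_isometric s t : inJ l s -> inJ l t -> Rabs (reparam t - reparam s) = Rabs (t - s).
Proof.
  intros Hs Ht.
  destruct (MVT_gen reparam s t reparam_rate) as (x & Hx & Hmvt).
  - intros x Hx; apply reparam_is_derive.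
    unfold inJ, Rmin, Rmax in *; destruct Rle_dec; lra.
  - intros x _; apply continuity_pt_filterlim, reparam_continuous.
  - rewrite Hmvt, Rabs_mult, reparam_rate_unit; [ring|].
    unfold inJ, Rmin, Rmax in *; destruct Rle_dec; lra.
Qed.

Lemma reparam_id_or_opp : (forall s, inJ l s -> reparam s = s) \/ (forall s, inJ l s -> reparam s = - s).
Proof.
  assert (HA : inJ l (- l / 2)) by (unfold inJ; lra).
  assert (HB : inJ l (l / 2)) by (unfold inJ; lra).
  pose proof (reparam_isometric _ _ HA HB) as Hends.
  pose proof (reparam_inJ (- l / 2)) as JA; pose proof (reparam_inJ (l / 2)) as JB.
  replace (l / 2 - - l / 2) with l in Hends by field; rewrite (Rabs_pos_eq l) in Hends by lra.
  unfold inJ in JA, JB.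
  assert (Hcases : (reparam (- l / 2) = - l / 2 /\ reparam (l / 2) = l / 2) \/
                   (reparam (- l / 2) = l / 2 /\ reparam (l / 2) = - l / 2))
    by (revert Hends; unfold Rabs; destruct Rcase_abs; intros; [right | left]; lra).
  destruct Hcases as [[HA' HB'] | [HA' HB']]; [left | right]; intros s Hs;
    pose proof (reparam_isometric _ _ HA Hs) as K1; pose proof (reparam_isometric _ _ Hs HB) as K2;
    pose proof (reparam_inJ s) as Js; unfold inJ in *; rewrite HA' in K1; rewrite HB' in K2;
    revert K1 K2; unfold Rabs; repeat destruct Rcase_abs; intros; lra.
Qed.

Lemma curve_isometry_fix_or_reverse :
  (forall s, inJ l s -> affine b E1 E2 E3 (c s) = c s) \/
  (forall s, inJ l s -> affine b E1 E2 E3 (c s) = c (- s)).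
Proof.
  destruct reparam_id_or_opp as [H | H]; [left | right]; intros s Hs;
    fold T; rewrite reparam_eq, H by exact Hs; reflexivity.
Qed.

End CurveIsometry.

(** * Congruences between a strip and its dual *)

(* If the surface swept by the unit field [X] along [c] meets [c s + v A] at heights
   [|w| < 2 v] for arbitrarily small [v > 0], then [A] lies in its tangent plane at [c s]. *)
Lemma contact_det3_eq0 l c (X : R -> V3) s A :
  arclength_curve l c -> inJ l s -> vnorm A = 1 -> vcont X s ->
  (forall t, inJ l t -> vnorm (X t) = 1) ->
  (forall d, 0 < d -> exists v t w, 0 < v < d /\ inJ l t /\ Rabs w < 2 * v /\
     vadd (c t) (vscale w (X t)) = vadd (c s) (vscale v A)) ->
  det3 A (vder c s) (X s) = 0.
Proof.
  intros Hc Hs HA HXc HX Hcontact; set (e := vder c s).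
  assert (He : vnorm e = 1) by apply (arclength_unit l c Hc s Hs).
  apply Rabs_le_all_eq0; intros ep Hep; assert (Hep8 : 0 < ep / 8) by lra.
  destruct (proj1 (locally_Rabs _ _)
              (filter_and _ _ (vder_approx c s (arclength_vdiff l c Hc s) _ Hep8)
                              (vcont_approx X s HXc _ Hep8))) as (d & Hd & Hnear).
  destruct (curve_bilipschitz_at l c Hc s Hs) as (m & Hm & Hbil).
  assert (Hdm : 0 < Rmin (d / 6) (m / 3)) by (apply Rmin_glb_lt; lra).
  destruct (Hcontact _ Hdm) as (v & t & w & Hv & Ht & Hw & Heq).
  pose proof (Rmin_l (d / 6) (m / 3)); pose proof (Rmin_r (d / 6) (m / 3)).
  assert (Hchord : vsub (c t) (c s) = vsub (vscale v A) (vscale w (X t)))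
    by (apply V3_ext; [apply (f_equal v1) in Heq | apply (f_equal v2) in Heq | apply (f_equal v3) in Heq];
        simpl in *; lra).
  assert (Hdist : vnorm (vsub (c t) (c s)) <= 3 * v).
  { rewrite Hchord; eapply Rle_trans; [apply vnorm_sub_le|].
    rewrite !vnorm_scale, HA, (HX t Ht), (Rabs_pos_eq v) by lra; lra. }
  specialize (Hbil t Ht ltac:(lra)).
  destruct (Hnear t ltac:(lra)) as [HR HXt]; fold e in HR.
  set (Rm := vsub (vsub (c t) (c s)) (vscale (t - s) e)) in *.
  assert (Hid : v * det3 A e (X s) = det3 Rm e (X s) + w * det3 (vsub (X t) (X s)) e (X s)).
  { transitivity (det3 (vadd (vsub (c t) (c s)) (vscale w (X t))) e (X s)).
    - rewrite Hchord; vec_ring.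
    - unfold Rm; vec_ring. }
  assert (HRm : Rabs (det3 Rm e (X s)) <= ep / 8 * (6 * v)).
  { eapply Rle_trans; [apply det3_le|]; rewrite He, HX by exact Hs.
    pose proof (Rabs_pos (t - s)); nra. }
  assert (HXd : Rabs (w * det3 (vsub (X t) (X s)) e (X s)) <= 2 * v * (ep / 8)).
  { rewrite Rabs_mult; pose proof (det3_le (vsub (X t) (X s)) e (X s)) as Hdet.
    rewrite He, HX in Hdet by exact Hs; pose proof (Rabs_pos w);
    pose proof (Rabs_pos (det3 (vsub (X t) (X s)) e (X s))); nra. }
  apply (Rmult_le_reg_l v); [lra|].
  rewrite <- (Rabs_pos_eq v) at 1 by lra; rewrite <- Rabs_mult, Hid.
  eapply Rle_trans; [apply Rabs_triang | lra].
Qed.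

Lemma nonplanar_fixing_affine_id l c b E1 E2 E3 : 0 < l -> ~ lies_in_plane l c -> orthonormal E1 E2 E3 ->
  (forall s, inJ l s -> affine b E1 E2 E3 (c s) = c s) ->
  (forall x, lincomb E1 E2 E3 x = x) /\ b = v0.
Proof.
  intros Hl Hnp HO Hfix.
  assert (H0 : inJ l 0) by (unfold inJ; lra).
  assert (HL : forall x, lincomb E1 E2 E3 x = x).
  { intros x; apply vnorm_sub_eq0; destruct (Req_dec (vnorm (vsub (lincomb E1 E2 E3 x) x)) 0) as [|Hu];
      [assumption | exfalso; apply Hnp].
    exists (c 0), (vsub (lincomb E1 E2 E3 x) x); split; [intros Hz; apply Hu; rewrite Hz; apply vnorm_v0|].
    intros s Hs.
    assert (Hy : lincomb E1 E2 E3 (vsub (c s) (c 0)) = vsub (c s) (c 0))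
      by (rewrite <- (affine_sub b), Hfix, Hfix by assumption; reflexivity).
    transitivity (dot (vsub (c s) (c 0)) (lincomb E1 E2 E3 x) - dot (vsub (c s) (c 0)) x); [vec_ring|].
    rewrite <- Hy at 1; rewrite dot_lincomb by exact HO; ring. }
  split; [exact HL|].
  pose proof (Hfix 0 H0) as H; unfold affine in H; rewrite HL in H.
  apply V3_ext; [apply (f_equal v1) in H | apply (f_equal v2) in H | apply (f_equal v3) in H];
  simpl in *; lra.
Qed.

Lemma sin_nonzero_small a : 0 < Rabs a < PI / 2 -> sin a <> 0.
Proof.
  intros Ha; destruct (Rle_lt_dec 0 a).
  - rewrite Rabs_pos_eq in Ha by lra; pose proof (sin_gt_0 a ltac:(lra) ltac:(lra)); lra.
  - rewrite Rabs_left in Ha by lra; pose proof (sin_gt_0 (- a) ltac:(lra) ltac:(lra)).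
    rewrite sin_neg in *; lra.
Qed.

Lemma cos_pos_small a : Rabs a < PI / 2 -> 0 < cos a.
Proof. intros Ha; apply cos_gt_0; revert Ha; unfold Rabs; destruct Rcase_abs; intros; lra. Qed.

Lemma sin_minus_eq0_small a b : Rabs a < PI / 2 -> Rabs b < PI / 2 -> sin (a - b) = 0 -> a = b.
Proof.
  intros Ha Hb H; assert (Hab : - PI < a - b < PI)
    by (revert Ha Hb; unfold Rabs; repeat destruct Rcase_abs; intros; lra).
  destruct (Rtotal_order (a - b) 0) as [Hlt | [Heq | Hgt]]; [exfalso | lra | exfalso].
  - pose proof (sin_gt_0 (- (a - b)) ltac:(lra) ltac:(lra)); rewrite sin_neg in *; lra.
  - pose proof (sin_gt_0 (a - b) ltac:(lra) ltac:(lra)); lra.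
Qed.

Lemma cos_inj_same_sign a b : 0 < Rabs a < PI / 2 -> 0 < Rabs b < PI / 2 -> 0 < a * b ->
  cos a = cos b -> a = b.
Proof.
  intros Ha Hb Hab Hcos.
  assert (Hinj : forall x y, 0 <= x < PI / 2 -> 0 <= y < PI / 2 -> cos x = cos y -> x = y).
  { intros x y Hx Hy E; destruct (Rtotal_order x y) as [Hlt | [| Hgt]]; [exfalso | assumption | exfalso].
    - pose proof (cos_decreasing_1 x y ltac:(lra) ltac:(lra) ltac:(lra) ltac:(lra) Hlt); lra.
    - pose proof (cos_decreasing_1 y x ltac:(lra) ltac:(lra) ltac:(lra) ltac:(lra) Hgt); lra. }
  destruct (Rle_lt_dec 0 a).
  - assert (0 < b) by nra; rewrite Rabs_pos_eq in Ha, Hb by lra; apply Hinj; lra.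
  - assert (b < 0) by nra; rewrite Rabs_left in Ha, Hb by lra.
    enough (- a = - b) by lra; apply Hinj; [lra | lra | rewrite !cos_neg; assumption].
Qed.

Lemma same_sign_on_J l (f : R -> R) : (forall t, continuous f t) ->
  (forall t, inJ l t -> f t <> 0) -> forall s t, inJ l s -> inJ l t -> 0 < f s * f t.
Proof.
  intros Hcont Hnz s t Hs Ht.
  destruct (Rlt_le_dec 0 (f s * f t)) as [|Hle]; [assumption | exfalso].
  destruct (IVT_gen f s t 0) as (x & Hx & Hx0).
  - intros x; apply continuity_pt_filterlim, Hcont.
  - pose proof (Hnz s Hs); pose proof (Hnz t Ht); unfold Rmin, Rmax; destruct Rle_dec; nra.
  - apply (Hnz x); [|exact Hx0].
    unfold inJ, Rmin, Rmax in *; destruct Rle_dec; lra.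
Qed.

Lemma reversal_positive_symmetry l c b E1 E2 E3 : arclength_curve l c -> orthonormal E1 E2 E3 ->
  det3 E1 E2 E3 = 1 -> (forall s, inJ l s -> affine b E1 E2 E3 (c s) = c (- s)) ->
  has_positive_symmetry l c.
Proof.
  intros Hc HO HD Hrev; pose proof (arclength_l_pos l c Hc) as Hl.
  assert (HB : inJ l (l / 2)) by (unfold inJ; lra).
  exists (affine b E1 E2 E3); split; [apply affine_isometry, HO|].
  split; [apply affine_orientation_preserving, HD|]; split.
  - exists (c (l / 2)); rewrite Hrev by exact HB; intros H.
    apply (arclength_inj l c Hc) in H; [lra | apply inJ_opp, HB | exact HB].
  - intros p; split.
    + intros (q & (s & Hs & ->) & ->); exists (- s); split; [apply inJ_opp, Hs | apply Hrev, Hs].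
    + intros (s & Hs & ->); exists (c (- s)).
      split; [exists (- s); split; [apply inJ_opp, Hs | reflexivity]|].
      rewrite Hrev, Ropp_involutive by (apply inJ_opp, Hs); reflexivity.
Qed.

Section Congruence.
Variables (l : R) (c : R -> V3) (alpha : R -> R) (b E1 E2 E3 : V3) (eps0 : R).
Hypothesis Hc : arclength_curve l c.
Hypothesis Ha : smooth_fun alpha.
Hypothesis Hal : forall s, inJ l s -> 0 < Rabs (alpha s) < PI / 2.
Hypothesis HO : orthonormal E1 E2 E3.
Hypothesis Heps0 : 0 < eps0.
Hypothesis Hcong : forall eps, 0 < eps < eps0 -> forall p,
  (exists q, image_Omega l eps (normal_form c alpha) q /\ p = affine b E1 E2 E3 q) <->
  image_Omega l eps (dual_normal_form c alpha) p.

Let T := affine b E1 E2 E3.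
Let L := lincomb E1 E2 E3.
Let Hl := arclength_l_pos l c Hc.
Let H0 : inJ l 0.
Proof. unfold inJ; lra. Qed.

Let rulings_det_nonzero a b1 b2 : 0 < Rabs a < PI / 2 -> 0 < sin b1 -> 0 < sin b2 ->
  sin b1 * sin b2 * (sin a * cos a) <> 0.
Proof.
  intros Hsmall Hb1 Hb2; pose proof (sin_nonzero_small a Hsmall); pose proof (cos_pos_small a ltac:(lra)).
  repeat apply Rmult_integral_contrapositive_currified; lra.
Qed.

Lemma congruence_image s v eps : 0 < eps < eps0 -> inJ l s -> - eps < v < eps ->
  exists t w, inJ l t /\ - eps < w < eps /\
    vadd (T (c s)) (vscale v (L (xi_nf c alpha s))) = vadd (c t) (vscale w (xi_nf c (fun r => - alpha r) t)).
Proof.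
  intros Heps Hs Hv.
  destruct (proj1 (Hcong eps Heps (T (normal_form c alpha s v)))) as (t & w & (Ht & Hw) & Heq).
  - exists (normal_form c alpha s v).
    split; [exists s, v; split; [split; assumption | reflexivity] | reflexivity].
  - exists t, w; split; [exact Ht | split; [exact Hw|]].
    transitivity (T (normal_form c alpha s v));
      [unfold T, L, normal_form; vec_ring | rewrite Heq; reflexivity].
Qed.

Lemma congruence_maps_curve s : inJ l s -> exists t, inJ l t /\ T (c s) = c t.
Proof.
  intros Hs; apply (curve_closed l c Hc); intros ep Hep.
  set (eps := Rmin eps0 ep / 2).
  assert (Heps : 0 < eps < eps0 /\ eps < ep)
    by (pose proof (Rmin_l eps0 ep); pose proof (Rmin_r eps0 ep);
        pose proof (Rmin_glb_lt eps0 ep 0 Heps0 Hep); unfold eps; lra).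
  destruct (congruence_image s 0 eps ltac:(lra) Hs ltac:(lra)) as (t & w & Ht & Hw & Heq).
  exists t; split; [exact Ht|].
  replace (vsub (c t) (T (c s))) with (vscale (- w) (xi_nf c (fun r => - alpha r) t))
    by (replace (T (c s)) with (vadd (T (c s)) (vscale 0 (L (xi_nf c alpha s)))) by vec_ring;
        rewrite Heq; vec_ring).
  rewrite vnorm_scale, (vnorm_xi_nf l) by assumption.
  rewrite Rabs_Ropp, Rmult_1_r; apply Rabs_def1; lra.
Qed.

Lemma congruence_contact s t : inJ l s -> inJ l t -> T (c s) = c t ->
  det3 (L (xi_nf c alpha s)) (vder c t) (xi_nf c (fun r => - alpha r) t) = 0.
Proof.
  intros Hs Ht Hst; apply (contact_det3_eq0 l); auto.
  - unfold L; rewrite vnorm_lincomb by exact HO; apply (vnorm_xi_nf l); assumption.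
  - apply (vcont_xi_nf l); [exact Hc | exact Ht | apply smooth_opp, Ha |].
    rewrite sin_neg; apply Ropp_neq_0_compat, sin_nonzero_small, Hal, Ht.
  - intros r Hr; apply (vnorm_xi_nf l); assumption.
  - intros d Hd; set (v := Rmin d eps0 / 3).
    assert (Hv : 0 < v < d /\ 2 * v < eps0)
      by (pose proof (Rmin_l d eps0); pose proof (Rmin_r d eps0);
          pose proof (Rmin_glb_lt d eps0 0 Hd Heps0); unfold v; lra).
    destruct (congruence_image s v (2 * v) ltac:(lra) Hs ltac:(lra)) as (r & w & Hr & Hw & Heq).
    exists v, r, w; split; [lra | split; [exact Hr | split; [apply Rabs_def1; lra |]]].
    rewrite <- Heq, Hst; reflexivity.
Qed.

Lemma congruence_not_fixing : ~ lies_in_plane l c -> ~ (forall s, inJ l s -> T (c s) = c s).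
Proof.
  intros Hnp Hfix.
  destruct (nonplanar_fixing_affine_id l c b E1 E2 E3 Hl Hnp HO Hfix) as [HL _].
  pose proof (congruence_contact 0 0 H0 H0 (Hfix 0 H0)) as Hdet.
  unfold L in Hdet; rewrite HL, !xi_nf_frenet, (det3_frenet l) in Hdet by assumption.
  unfold ruling_coords in Hdet; simpl in Hdet; rewrite cos_neg, sin_neg in Hdet.
  apply (rulings_det_nonzero (alpha 0) (beta_nf c alpha 0) (beta_nf c (fun r => - alpha r) 0));
    [apply Hal, H0 | apply sin_beta_nf_pos | apply sin_beta_nf_pos | lra].
Qed.

Section Reversing.
Hypothesis Hrev : forall s, inJ l s -> T (c s) = c (- s).

Let Hrev' s : inJ l s -> c (- s) = affine b E1 E2 E3 (c s).
Proof. intros Hs; symmetry; apply Hrev, Hs. Qed.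

Lemma congruence_reversal_det : det3 E1 E2 E3 = 1.
Proof.
  destruct (orthonormal_det3 _ _ _ HO) as [| HD]; [assumption | exfalso].
  pose proof (congruence_contact 0 (- 0) H0 (inJ_opp l 0 H0) (Hrev 0 H0)) as Hdet.
  unfold L in Hdet; rewrite (reversal_det_rulings l c b E1 E2 E3 Hc HO Hrev' alpha 0 H0), HD, Ropp_0 in Hdet.
  apply (rulings_det_nonzero (alpha 0) (beta_nf c alpha 0) (beta_nf c (fun r => - alpha r) 0));
    [apply Hal, H0 | apply sin_beta_nf_pos | apply sin_beta_nf_pos | lra].
Qed.

Lemma congruence_reversal_even s : inJ l s -> alpha (- s) = alpha s.
Proof.
  intros Hs; pose proof (congruence_contact s (- s) Hs (inJ_opp l s Hs) (Hrev s Hs)) as Hdet.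
  unfold L in Hdet; rewrite (reversal_det_rulings l c b E1 E2 E3 Hc HO Hrev' alpha s Hs),
    congruence_reversal_det, Rmult_1_l in Hdet.
  apply sin_minus_eq0_small; [apply Hal, inJ_opp, Hs | apply Hal, Hs |].
  rewrite sin_minus.
  pose proof (sin_beta_nf_pos c alpha s); pose proof (sin_beta_nf_pos c (fun r => - alpha r) (- s)).
  apply Rmult_integral in Hdet; destruct Hdet as [Hdet | Hdet]; [nra | lra].
Qed.

End Reversing.

Lemma congruence_symmetric : ~ lies_in_plane l c ->
  has_positive_symmetry l c /\ symmetric_on_J l (geod_curv c alpha).
Proof.
  intros Hnp.
  destruct (curve_isometry_fix_or_reverse l c b E1 E2 E3 Hc HO congruence_maps_curve) as [Hfix | Hrev].
  - exfalso; exact (congruence_not_fixing Hnp Hfix).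
  - split; [exact (reversal_positive_symmetry l c b E1 E2 E3 Hc HO (congruence_reversal_det Hrev) Hrev)|].
    intros s Hs; unfold geod_curv.
    rewrite (reversal_curvature l c b E1 E2 E3 Hc HO (fun r Hr => eq_sym (Hrev r Hr)) s Hs).
    rewrite (congruence_reversal_even Hrev s Hs); reflexivity.
Qed.

End Congruence.

Lemma nonplanar_congruent_dual_symmetric l c alpha : arclength_curve l c -> admissible_normal_form l c alpha ->
  ~ lies_in_plane l c -> congruent_small l (normal_form c alpha) (dual_normal_form c alpha) ->
  has_positive_symmetry l c /\ symmetric_on_J l (geod_curv c alpha).
Proof.
  intros Hc (Ha & Hal & _) Hnp (T & eps0 & HT & Heps0 & Hcong).
  destruct (isometry_affine T HT) as (b & E1 & E2 & E3 & HO & HTe).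
  apply (congruence_symmetric l c alpha b E1 E2 E3 eps0 Hc Ha Hal HO Heps0); [|exact Hnp].
  intros eps Heps p; rewrite <- (Hcong eps Heps p).
  split; intros (q & Hq & ->); exists q; rewrite HTe; auto.
Qed.

Lemma geod_curv_symmetric_even l c b E1 E2 E3 alpha : arclength_curve l c -> orthonormal E1 E2 E3 ->
  (forall s, inJ l s -> c (- s) = affine b E1 E2 E3 (c s)) -> smooth_fun alpha ->
  (forall s, inJ l s -> 0 < Rabs (alpha s) < PI / 2) ->
  symmetric_on_J l (geod_curv c alpha) -> forall s, inJ l s -> alpha (- s) = alpha s.
Proof.
  intros Hc HO Hrev Ha Hal Hmu s Hs; pose proof (inJ_opp l s Hs) as Hs'.
  apply cos_inj_same_sign; [apply Hal, Hs' | apply Hal, Hs | |].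
  - apply (same_sign_on_J l); [intros t; apply smooth_continuous, Ha | | exact Hs' | exact Hs].
    intros t Ht H0; pose proof (Hal t Ht) as H; rewrite H0, Rabs_R0 in H; lra.
  - pose proof (Hmu s Hs) as H; unfold geod_curv in H.
    rewrite (reversal_curvature l c b E1 E2 E3 Hc HO Hrev s Hs) in H.
    pose proof (arclength_curvature_pos l c Hc s Hs).
    apply (Rmult_eq_reg_l (curvature c s)); lra.
Qed.

Lemma nonplanar_symmetric_congruent_dual l c alpha : arclength_curve l c ->
  admissible_normal_form l c alpha -> ~ lies_in_plane l c ->
  has_positive_symmetry l c -> symmetric_on_J l (geod_curv c alpha) ->
  congruent_small l (normal_form c alpha) (dual_normal_form c alpha).
Proof.
  intros Hc (Ha & Hal & _) Hnp (T & HT & Hor & (x & Hx) & Himg) Hmu.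
  destruct (isometry_affine T HT) as (b & E1 & E2 & E3 & HO & HTe).
  assert (Hmap : forall s, inJ l s -> exists t, inJ l t /\ affine b E1 E2 E3 (c s) = c t).
  { intros s Hs; destruct (proj1 (Himg (T (c s)))) as (t & Ht & Heq);
      [exists (c s); split; [exists s; split; [exact Hs | reflexivity] | reflexivity]|].
    exists t; split; [exact Ht | rewrite <- HTe; exact Heq]. }
  destruct (curve_isometry_fix_or_reverse l c b E1 E2 E3 Hc HO Hmap) as [Hfix | Hrev].
  - exfalso; apply Hx.
    destruct (nonplanar_fixing_affine_id l c b E1 E2 E3 (arclength_l_pos l c Hc) Hnp HO Hfix) as [HL Hb].
    rewrite HTe; unfold affine; rewrite HL, Hb; vec_ring.
  - assert (Hrev' : forall s, inJ l s -> c (- s) = affine b E1 E2 E3 (c s))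
      by (intros s Hs; symmetry; apply Hrev, Hs).
    apply (symmetric_congruent_dual l c b E1 E2 E3 Hc HO Hrev' alpha Ha).
    + apply (affine_orientation_det b); intros x0 x1 x2 x3; rewrite <- !HTe; apply Hor.
    + apply (geod_curv_symmetric_even l c b E1 E2 E3); assumption.
Qed.

Theorem proposition4p4 (l : R) (c : R -> V3) (alpha : R -> R) :
  arclength_curve l c ->
  admissible_normal_form l c alpha ->
  (congruent_small l (normal_form c alpha) (dual_normal_form c alpha) <->
   (lies_in_plane l c \/
    (has_positive_symmetry l c /\ symmetric_on_J l (geod_curv c alpha)))).
Proof.
  intros Hc Hnf.
  destruct (classic (lies_in_plane l c)) as [(p0 & u & Hu & Hplane) | Hnp].
  - split; [intros _; left; exists p0, u; auto |].
    intros _; apply (planar_congruent_dual l c alpha p0 u Hc Hu Hplane).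
  - split.
    + intros Hcong; right; apply nonplanar_congruent_dual_symmetric; assumption.
    + intros [Hpl | [Hsym Hmu]]; [contradiction|].
      apply nonplanar_symmetric_congruent_dual; assumption.
Qed.
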